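(* For the SVIQS system, assume $\omega\ge\gamma=\eta$ and $R_0>1$. Then the system has a unique endemic equilibrium $E^*=(S_k^*,V_k^*,I_k^*,Q_k^* )_{k=1}^n$ (equilibrium with nonnegative components and $\Theta>0$), and every solution whose initial data satisfy $S_k(0),V_k(0),I_k(0),Q_k(0)\ge0$, $S_k(0)+V_k(0)+I_k(0)+Q_k(0)=N_k^*$ for all $k$, and $\sum_{k=1}^n p(k)I_k(0)>0$, satisfies $\lim_{t\to\infty}S_k(t)=S_k^*$, $\lim_{t\to\infty}V_k(t)=V_k^*$, $\lim_{t\to\infty}I_k(t)=I_k^*$, $\lim_{t\to\infty}Q_k(t)=Q_k^*$ for every $k$; i.e. $E^*$ is globally attractive.
   Context: Fix an integer $n\ge1$ and numbers $p(1),\dots,p(n)>0$ with $\sum_{k=1}^n p(k)=1$; set $\langle k\rangle=\sum_{k=1}^n kp(k)$. Fix constants $b>d>0$ and let $\Phi^*>0$ satisfy $\Phi^*=\frac{1}{\langle k\rangle}\sum_{i=1}^n \frac{i\,p(i)\,b\Phi^*}{d+bi\Phi^*}$. For $k=1,\dots,n$ put $N_k^*=\frac{bk\Phi^*}{d+bk\Phi^*}\in(0,1)$ and $\Lambda_k=bk(1-N_k^* )\Phi^*$ (so $\Lambda_k=dN_k^*>0$). Parameters: $\lambda(k)>0$, $\varphi(k)>0$, $\mu_k>0$ for $k=1,\dots,n$; constants $\beta,\gamma,\eta,\omega>0$ and $\delta\in[0,1]$. For functions $I_1(t),\dots,I_n(t)$ set $\Theta(t)=\frac{1}{\langle k\rangle}\sum_{i=1}^n\varphi(i)p(i)I_i(t)$.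 The SVIQS system is, for $k=1,\dots,n$: $S_k'=\Lambda_k-\lambda(k)S_k\Theta+\gamma I_k+\eta Q_k+\omega V_k-(\mu_k+d)S_k$, $V_k'=\mu_kS_k-\delta\lambda(k)V_k\Theta-(d+\omega)V_k$, $I_k'=\lambda(k)S_k\Theta+\delta\lambda(k)V_k\Theta-(\gamma+\beta+d)I_k$, $Q_k'=\beta I_k-(\eta+d)Q_k$. Its basic reproduction number is $R_0=\frac{1}{\langle k\rangle}\sum_{i=1}^n\frac{\lambda(i)\varphi(i)p(i)\Lambda_i(\omega+d+\delta\mu_i)}{d(\gamma+\beta+d)(\omega+\mu_i+d)}$. *)

From Stdlib Require Import Reals Lra.
Open Scope R_scope.

(* sumk n f = f 1 + f 2 + ... + f n  (indices 1..n, as in the paper) *)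
Fixpoint sumk (n : nat) (f : nat -> R) : R :=
  match n with
  | O => 0
  | S m => sumk m f + f (S m)
  end.

Definition kavg (n : nat) (p : nat -> R) : R := sumk n (fun k => INR k * p k).

Definition Nstar (b d Phi : R) (k : nat) : R :=
  b * INR k * Phi / (d + b * INR k * Phi).
Definition Lam (b d Phi : R) (k : nat) : R :=
  b * INR k * (1 - Nstar b d Phi k) * Phi.

Definition Theta (n : nat) (p phi : nat -> R) (I : nat -> R) : R :=
  / kavg n p * sumk n (fun i => phi i * p i * I i).

Definition Rnought (n : nat) (p : nat -> R) (b d Phi : R) (lam phi mu : nat -> R)
  (beta gamma omega delta : R) : R :=
  / kavg n p * sumk n (fun i =>
     lam i * phi i * p i * Lam b d Phi i * (omega + d + delta * mu i)
     / (d * (gamma + beta + d) * (omega + mu i + d))).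

(* Right-hand sides of the SVIQS system for node class k, with Theta = th *)
Definition fS (Lk lamk muk gamma eta omega d th Sk Vk Ik Qk : R) : R :=
  Lk - lamk * Sk * th + gamma * Ik + eta * Qk + omega * Vk - (muk + d) * Sk.
Definition fV (lamk muk delta omega d th Sk Vk : R) : R :=
  muk * Sk - delta * lamk * Vk * th - (d + omega) * Vk.
Definition fI (lamk delta gamma beta d th Sk Vk Ik : R) : R :=
  lamk * Sk * th + delta * lamk * Vk * th - (gamma + beta + d) * Ik.
Definition fQ (beta eta d Ik Qk : R) : R :=
  beta * Ik - (eta + d) * Qk.

Definition lim_infty (f : R -> R) (l : R) : Prop :=
  forall eps, eps > 0 -> exists T, forall t, t >= T -> Rabs (f t - l) < eps.

Definition right_cont0 (f : R -> R) : Prop :=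
  forall eps, eps > 0 -> exists del, del > 0 /\
    forall t, 0 <= t < del -> Rabs (f t - f 0) < eps.

Definition endemic_eq (n : nat) (p : nat -> R) (b d Phi : R)
  (lam phi mu : nat -> R) (beta gamma eta omega delta : R)
  (Ss Vs Is Qs : nat -> R) : Prop :=
  (forall k, (1 <= k <= n)%nat ->
     0 <= Ss k /\ 0 <= Vs k /\ 0 <= Is k /\ 0 <= Qs k) /\
  Theta n p phi Is > 0 /\
  (forall k, (1 <= k <= n)%nat ->
     let th := Theta n p phi Is in
     fS (Lam b d Phi k) (lam k) (mu k) gamma eta omega d th
        (Ss k) (Vs k) (Is k) (Qs k) = 0 /\
     fV (lam k) (mu k) delta omega d th (Ss k) (Vs k) = 0 /\
     fI (lam k) delta gamma beta d th (Ss k) (Vs k) (Is k) = 0 /\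
     fQ beta eta d (Is k) (Qs k) = 0).

Definition is_solution (n : nat) (p : nat -> R) (b d Phi : R)
  (lam phi mu : nat -> R) (beta gamma eta omega delta : R)
  (S V I Q : nat -> R -> R) : Prop :=
  forall k, (1 <= k <= n)%nat ->
    (forall t, 0 < t ->
       let th := Theta n p phi (fun i => I i t) in
       derivable_pt_lim (S k) t
         (fS (Lam b d Phi k) (lam k) (mu k) gamma eta omega d th
             (S k t) (V k t) (I k t) (Q k t)) /\
       derivable_pt_lim (V k) t
         (fV (lam k) (mu k) delta omega d th (S k t) (V k t)) /\
       derivable_pt_lim (I k) t
         (fI (lam k) delta gamma beta d th (S k t) (V k t) (I k t)) /\
       derivable_pt_lim (Q k) t
         (fQ beta eta d (I k t) (Q k t))) /\
    right_cont0 (S k) /\ right_cont0 (V k) /\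
    right_cont0 (I k) /\ right_cont0 (Q k).

(* For a fixed force of infection [th] the equilibrium equations of each degree class
   are linear, so endemic equilibria correspond to the roots of a scalar equation
   [G th = 1].  With [gamma = eta] and [omega >= gamma], [G] is strictly decreasing, and
   [G 0 = R0 > 1] while [G th -> 0]; hence there is exactly one endemic equilibrium
   [(Ss, Vs, Is, Qs)], with force of infection [ths].

   Along a solution, [S + V + I + Q = N_k] is conserved, a Gronwall estimate on the
   squared negative parts keeps the state nonnegative, and integrating factors make it
   positive.  The Volterra function
     [L = sum_k w_k (Ss g(S/Ss) + Vs g(V/Vs) + Is g(I/Is))],  [g u = u - 1 - ln u],
   then decreases at least as fast as a dissipation term controlling [(S - Ss)^2],
   [g (V/Vs)] and [g ((S/Ss) (Theta/ths) / (I/Is))]; the remaining cross terms have a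
   nonpositive sum over [k] by [ln u <= u - 1].  Barbalat's lemma turns this into
   convergence of [S] and [V], then of [Theta] through the [S]-equation, then of [I],
   and finally of [Q] by conservation. *)

From Stdlib Require Import Reals Lra Lia Psatz Classical ZArith.
Open Scope R_scope.

(** * Finite sums over the degree classes *)

Lemma sumk_ext n f g :
  (forall k, (1 <= k <= n)%nat -> f k = g k) -> sumk n f = sumk n g.
Proof.
  induction n as [|n IH]; simpl; intros H; [reflexivity|].
  rewrite IH, H; [reflexivity|lia|intros; apply H; lia].
Qed.

Lemma sumk_plus n f g : sumk n (fun k => f k + g k) = sumk n f + sumk n g.
Proof. induction n; simpl; [lra|]. rewrite IHn; lra. Qed.

Lemma sumk_minus n f g : sumk n (fun k => f k - g k) = sumk n f - sumk n g.
Proof. induction n; simpl; [lra|]. rewrite IHn; lra. Qed.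

Lemma sumk_scal n c f : sumk n (fun k => c * f k) = c * sumk n f.
Proof. induction n; simpl; [lra|]. rewrite IHn; lra. Qed.

Lemma sumk_le n f g :
  (forall k, (1 <= k <= n)%nat -> f k <= g k) -> sumk n f <= sumk n g.
Proof.
  induction n as [|n IH]; simpl; intros H; [lra|].
  assert (sumk n f <= sumk n g) by (apply IH; intros; apply H; lia).
  assert (f (S n) <= g (S n)) by (apply H; lia). lra.
Qed.

Lemma sumk_lt n f g : (1 <= n)%nat ->
  (forall k, (1 <= k <= n)%nat -> f k < g k) -> sumk n f < sumk n g.
Proof.
  intros Hn H. destruct n as [|n]; [lia|]. simpl.
  assert (sumk n f <= sumk n g) by (apply sumk_le; intros; left; apply H; lia).
  assert (f (S n) < g (S n)) by (apply H; lia). lra.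
Qed.

Lemma sumk_nonneg n f :
  (forall k, (1 <= k <= n)%nat -> 0 <= f k) -> 0 <= sumk n f.
Proof.
  intros H. replace 0 with (sumk n (fun _ => 0)) by (clear; induction n; simpl; lra).
  now apply sumk_le.
Qed.

Lemma sumk_pos n f : (1 <= n)%nat ->
  (forall k, (1 <= k <= n)%nat -> 0 < f k) -> 0 < sumk n f.
Proof.
  intros Hn H. replace 0 with (sumk n (fun _ => 0)) by (clear; induction n; simpl; lra).
  now apply sumk_lt.
Qed.

Lemma sumk_ge_term n f j : (forall k, (1 <= k <= n)%nat -> 0 <= f k) ->
  (1 <= j <= n)%nat -> f j <= sumk n f.
Proof.
  induction n as [|n IH]; simpl; intros H Hj; [lia|].
  destruct (Nat.eq_dec j (S n)) as [->|Hne].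
  - assert (0 <= sumk n f) by (apply sumk_nonneg; intros; apply H; lia). lra.
  - assert (f j <= sumk n f) by (apply IH; [intros; apply H|]; lia).
    assert (0 <= f (S n)) by (apply H; lia). lra.
Qed.

Lemma sumk_le_term n f j : (forall k, (1 <= k <= n)%nat -> f k <= 0) ->
  (1 <= j <= n)%nat -> sumk n f <= f j.
Proof.
  intros H Hj.
  assert (-1 * f j <= sumk n (fun k => -1 * f k)).
  { apply (sumk_ge_term n (fun k => -1 * f k)); auto.
    intros k Hk; specialize (H k Hk); lra. }
  rewrite sumk_scal in H0. lra.
Qed.

Lemma sumk_exists_pos n f : 0 < sumk n f -> exists j, (1 <= j <= n)%nat /\ 0 < f j.
Proof.
  induction n as [|n IH]; simpl; intros H; [lra|].
  destruct (Rlt_or_le 0 (f (S n))).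
  - exists (S n); split; [lia|auto].
  - destruct IH as [j [Hj Hf]]; [lra|]. exists j; split; [lia|auto].
Qed.

Lemma sumk_abs n f : Rabs (sumk n f) <= sumk n (fun k => Rabs (f k)).
Proof.
  induction n; simpl; [rewrite Rabs_R0; lra|].
  eapply Rle_trans; [apply Rabs_triang|]. lra.
Qed.

Lemma sumk_mult_le n (a x : nat -> R) :
  (forall k, (1 <= k <= n)%nat -> 0 <= a k /\ 0 <= x k) ->
  sumk n (fun k => a k * x k) <= sumk n a * sumk n x.
Proof.
  intros H. rewrite <- sumk_scal. apply sumk_le. intros k Hk. destruct (H k Hk).
  apply Rmult_le_compat_r; auto. apply sumk_ge_term; auto. intros j Hj; apply H; auto.
Qed.

Lemma derivable_pt_lim_sumk n (F : nat -> R -> R) (F' : nat -> R) t :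
  (forall k, (1 <= k <= n)%nat -> derivable_pt_lim (F k) t (F' k)) ->
  derivable_pt_lim (fun s => sumk n (fun k => F k s)) t (sumk n F').
Proof.
  induction n; simpl; intros H; [apply derivable_pt_lim_const|].
  apply (derivable_pt_lim_plus (fun s => sumk n (fun k => F k s)) (F (S n)));
    [apply IHn; intros|]; apply H; lia.
Qed.

Lemma continuity_pt_sumk n (F : nat -> R -> R) x :
  (forall k, (1 <= k <= n)%nat -> continuity_pt (F k) x) ->
  continuity_pt (fun t => sumk n (fun k => F k t)) x.
Proof.
  induction n; simpl; intros H; [apply continuity_pt_const; now intros|].
  apply (continuity_pt_plus (fun t => sumk n (fun k => F k t)) (F (S n)));
    [apply IHn; intros|]; apply H; lia.
Qed.

Lemma uniform_bound_family n (P : nat -> R -> Prop) :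
  (forall k B B', B <= B' -> P k B -> P k B') ->
  (forall k, (1 <= k <= n)%nat -> exists B, P k B) ->
  exists B, forall k, (1 <= k <= n)%nat -> P k B.
Proof.
  intros Hmono. induction n as [|n IH]; intros H; [exists 0; intros; lia|].
  destruct IH as [B1 HB1]; [intros; apply H; lia|].
  destruct (H (S n)) as [B2 HB2]; [lia|].
  exists (Rmax B1 B2). intros k Hk. destruct (Nat.eq_dec k (S n)) as [->|].
  - eapply Hmono; [apply Rmax_r|auto].
  - eapply Hmono; [apply Rmax_l|apply HB1; lia].
Qed.

(** * Differential inequalities on [(0, +oo)] *)

Lemma exp_le_compat x y : x <= y -> exp x <= exp y.
Proof.
  intros H. destruct (Rle_lt_or_eq_dec x y H) as [Hlt| ->]; [|lra].
  left; now apply exp_increasing.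
Qed.

Lemma exp_le_1 x : x <= 0 -> exp x <= 1.
Proof. intros H. rewrite <- exp_0. now apply exp_le_compat. Qed.

Lemma derive_nonpos_le (f f' : R -> R) a b : a < b ->
  (forall c, a <= c <= b -> derivable_pt_lim f c (f' c)) ->
  (forall c, a < c < b -> f' c <= 0) -> f b <= f a.
Proof.
  intros Hab Hd Hn. destruct (MVT_cor2 f f' a b Hab Hd) as [c [Hc Hc2]].
  specialize (Hn c Hc2). nra.
Qed.

Lemma derive_pos_lt (f f' : R -> R) a b : a < b ->
  (forall c, a <= c <= b -> derivable_pt_lim f c (f' c)) ->
  (forall c, a < c < b -> 0 < f' c) -> f a < f b.
Proof.
  intros Hab Hd Hn. destruct (MVT_cor2 f f' a b Hab Hd) as [c [Hc Hc2]].
  specialize (Hn c Hc2). nra.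
Qed.

Lemma increment_le_of_derive_bound (f f' : R -> R) a b K : a < b ->
  (forall c, a <= c <= b -> derivable_pt_lim f c (f' c)) ->
  (forall c, a < c < b -> Rabs (f' c) <= K) -> Rabs (f b - f a) <= K * (b - a).
Proof.
  intros Hab Hd Hn. destruct (MVT_cor2 f f' a b Hab Hd) as [c [Hc Hc2]].
  specialize (Hn c Hc2). rewrite Hc, Rabs_mult, (Rabs_right (b - a)) by lra.
  apply Rmult_le_compat_r; lra.
Qed.

Lemma derivable_pt_lim_mult_exp (f : R -> R) f' K t : derivable_pt_lim f t f' ->
  derivable_pt_lim (fun s => f s * exp (K * s)) t ((f' + K * f t) * exp (K * t)).
Proof.
  intros Hf.
  replace ((f' + K * f t) * exp (K * t))
    with (f' * exp (K * t) + f t * (exp (K * t) * (K * 1))) by ring.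
  apply (derivable_pt_lim_mult f (fun s => exp (K * s))); auto.
  apply (derivable_pt_lim_comp (fun s => K * s) exp).
  - apply derivable_pt_lim_scal, derivable_pt_lim_id.
  - apply derivable_pt_lim_exp.
Qed.

Definition small0 (g : R -> R) : Prop :=
  forall eps, eps > 0 -> exists del, del > 0 /\ forall t, 0 <= t < del -> g t < eps.

Lemma small0_ge g t c : small0 g -> 0 < t -> (forall s, 0 < s < t -> c <= g s) -> c <= 0.
Proof.
  intros Hg Ht Hc. apply Rnot_lt_le; intros Hpos.
  destruct (Hg c Hpos) as [del [Hdel Hsmall]].
  set (s := Rmin (del / 2) (t / 2)).
  assert (0 < s /\ s < del /\ s < t).
  { unfold s; repeat split; [apply Rmin_glb_lt; lra| |];
      [apply Rle_lt_trans with (del / 2)|apply Rle_lt_trans with (t / 2)];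
      auto using Rmin_l, Rmin_r; lra. }
  specialize (Hsmall s ltac:(lra)). specialize (Hc s ltac:(lra)). lra.
Qed.

Lemma small0_le g h : (forall t, 0 <= t -> g t <= h t) -> small0 h -> small0 g.
Proof.
  intros H Hh eps He. destruct (Hh eps He) as [del [Hd H2]].
  exists del; split; auto. intros t Ht. specialize (H2 t Ht). specialize (H t ltac:(lra)). lra.
Qed.

Lemma small0_plus g h : small0 g -> small0 h -> small0 (fun t => g t + h t).
Proof.
  intros Hg Hh eps He.
  destruct (Hg (eps / 2)) as [d1 [Hd1 H1]]; [lra|].
  destruct (Hh (eps / 2)) as [d2 [Hd2 H2]]; [lra|].
  exists (Rmin d1 d2); split; [apply Rmin_glb_lt; lra|]. intros t Ht.
  pose proof (Rmin_l d1 d2). pose proof (Rmin_r d1 d2).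
  specialize (H1 t ltac:(lra)). specialize (H2 t ltac:(lra)). lra.
Qed.

Lemma small0_sumk n (G : nat -> R -> R) : (forall k, (1 <= k <= n)%nat -> small0 (G k)) ->
  small0 (fun t => sumk n (fun k => G k t)).
Proof.
  induction n; intros H; simpl.
  - intros eps He. exists 1. split; [lra|]. intros; lra.
  - apply (small0_plus (fun t => sumk n (fun k => G k t)) (G (S n)));
      [apply IHn; intros|]; apply H; lia.
Qed.

Lemma small0_right_cont0 f : right_cont0 f -> small0 (fun t => f 0 - f t).
Proof.
  intros H eps He. destruct (H eps He) as [del [Hd H2]]. exists del; split; auto.
  intros t Ht. specialize (H2 t Ht). rewrite Rabs_minus_sym in H2.
  pose proof (Rle_abs (f 0 - f t)). lra.
Qed.

Lemma small0_sqr_diff f : right_cont0 f -> small0 (fun t => (f t - f 0) * (f t - f 0)).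
Proof.
  intros H eps He. destruct (H (Rmin 1 eps)) as [del [Hd Hd2]]; [apply Rmin_glb_lt; lra|].
  exists del; split; auto. intros t Ht. specialize (Hd2 t Ht).
  pose proof (Rmin_l 1 eps). pose proof (Rmin_r 1 eps). pose proof (Rabs_pos (f t - f 0)).
  assert (Rabs (f t - f 0) * Rabs (f t - f 0) < Rmin 1 eps * Rmin 1 eps)
    by (apply Rmult_le_0_lt_compat; lra).
  rewrite <- Rabs_mult, Rabs_right in H3 by (apply Rle_ge, Rle_0_sqr). nra.
Qed.

Lemma right_cont0_le f t c : right_cont0 f -> 0 < t ->
  (forall s, 0 < s < t -> f s <= c) -> f 0 <= c.
Proof.
  intros Hf Ht Hc.
  assert (f 0 - c <= 0); [|lra].
  apply (small0_ge _ t _ (small0_right_cont0 f Hf) Ht).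
  intros s Hs. specialize (Hc s Hs). lra.
Qed.

Lemma right_cont0_plus f g : right_cont0 f -> right_cont0 g -> right_cont0 (fun t => f t + g t).
Proof.
  intros Hf Hg eps He.
  destruct (Hf (eps / 2)) as [d1 [Hd1 H1]]; [lra|].
  destruct (Hg (eps / 2)) as [d2 [Hd2 H2]]; [lra|].
  exists (Rmin d1 d2); split; [apply Rmin_glb_lt; lra|]. intros t Ht.
  pose proof (Rmin_l d1 d2). pose proof (Rmin_r d1 d2).
  specialize (H1 t ltac:(lra)). specialize (H2 t ltac:(lra)).
  replace (f t + g t - (f 0 + g 0)) with ((f t - f 0) + (g t - g 0)) by ring.
  eapply Rle_lt_trans; [apply Rabs_triang|lra].
Qed.

Lemma right_cont0_opp f : right_cont0 f -> right_cont0 (fun t => - f t).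
Proof.
  intros Hf eps He. destruct (Hf eps He) as [del [Hd H]]. exists del; split; auto.
  intros t Ht. replace (- f t - - f 0) with (- (f t - f 0)) by ring.
  rewrite Rabs_Ropp. auto.
Qed.

Lemma right_cont0_const c : right_cont0 (fun _ => c).
Proof. intros eps He. exists 1. split; [lra|]. intros. rewrite Rminus_diag, Rabs_R0; lra. Qed.

(* Via the integrating factor [exp (K t)]. *)
Lemma integrating_factor_lb (f f' : R -> R) K : 0 <= K ->
  (forall t, 0 < t -> derivable_pt_lim f t (f' t)) ->
  (forall t, 0 < t -> 0 <= f' t + K * f t) -> right_cont0 f -> 0 <= f 0 ->
  forall t, 0 < t -> f 0 * exp (- (K * t)) <= f t.
Proof.
  intros HK Hd Hpos Hrc Hf0 t Ht.
  set (h := fun s => f s * exp (K * s)).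
  assert (Hmono : forall s, 0 < s < t -> h s <= h t).
  { intros s Hs. assert (- h t <= - h s); [|lra].
    apply (derive_nonpos_le (fun s => - h s) (fun s => - ((f' s + K * f s) * exp (K * s)))); [lra| |].
    - intros c Hc. apply derivable_pt_lim_opp, derivable_pt_lim_mult_exp, Hd. lra.
    - intros c Hc. pose proof (Hpos c ltac:(lra)). pose proof (exp_pos (K * c)). nra. }
  assert (Hfs : forall s, f s = h s * exp (- (K * s))).
  { intros s. unfold h. rewrite Rmult_assoc, <- exp_plus.
    replace (K * s + - (K * s)) with 0 by ring. rewrite exp_0; ring. }
  assert (Hh : f 0 <= h t).
  { destruct (Rle_or_lt 0 (h t)) as [Hnn|Hneg].
    - apply (right_cont0_le f t); auto. intros s Hs. rewrite Hfs.
      pose proof (Hmono s Hs). pose proof (exp_pos (- (K * s))).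
      assert (exp (- (K * s)) <= 1) by (apply exp_le_1; nra). nra.
    - exfalso.
      assert (f 0 <= h t * exp (- (K * t))).
      { apply (right_cont0_le f t); auto. intros s Hs. rewrite Hfs.
        pose proof (Hmono s Hs). pose proof (exp_pos (- (K * s))).
        assert (exp (- (K * t)) <= exp (- (K * s))) by (apply exp_le_compat; nra). nra. }
      pose proof (exp_pos (- (K * t))). nra. }
  rewrite (Hfs t). pose proof (exp_pos (- (K * t))). nra.
Qed.

Lemma integrating_factor_pos (f f' : R -> R) K : 0 <= K ->
  (forall t, 0 < t -> derivable_pt_lim f t (f' t)) ->
  (forall t, 0 < t -> 0 < f' t + K * f t) -> right_cont0 f -> 0 <= f 0 ->
  forall t, 0 < t -> 0 < f t.
Proof.
  intros HK Hd Hpos Hrc Hf0 t Ht.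
  assert (Hhalf : 0 <= f (t / 2)).
  { assert (H := integrating_factor_lb f f' K HK Hd
      (fun s hs => Rlt_le _ _ (Hpos s hs)) Hrc Hf0 (t / 2) ltac:(lra)).
    pose proof (exp_pos (- (K * (t / 2)))). nra. }
  assert (f (t / 2) * exp (K * (t / 2)) < f t * exp (K * t)).
  { apply (derive_pos_lt (fun s => f s * exp (K * s))
      (fun s => (f' s + K * f s) * exp (K * s))); [lra| |].
    - intros c Hc. apply derivable_pt_lim_mult_exp, Hd. lra.
    - intros c Hc. apply Rmult_lt_0_compat; [apply Hpos; lra|apply exp_pos]. }
  pose proof (exp_pos (K * (t / 2))). pose proof (exp_pos (K * t)). nra.
Qed.

Lemma linear_ode_zero (f f' : R -> R) K : 0 <= K ->
  (forall t, 0 < t -> derivable_pt_lim f t (f' t)) ->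
  (forall t, 0 < t -> f' t + K * f t = 0) -> right_cont0 f -> f 0 = 0 ->
  forall t, 0 < t -> f t = 0.
Proof.
  intros HK Hd Hlin Hrc Hf0 t Ht.
  assert (Hup := integrating_factor_lb f f' K HK Hd
    ltac:(intros s hs; rewrite Hlin; lra) Hrc ltac:(lra) t Ht).
  assert (Hdown := integrating_factor_lb (fun s => - f s) (fun s => - f' s) K HK
    ltac:(intros s hs; apply derivable_pt_lim_opp; auto)
    ltac:(intros s hs; specialize (Hlin s hs); lra)
    (right_cont0_opp f Hrc) ltac:(lra) t Ht).
  simpl in Hdown. rewrite Hf0 in Hup, Hdown. lra.
Qed.

Lemma gronwall_zero (W W' : R -> R) K T : 0 <= K ->
  (forall t, 0 < t -> derivable_pt_lim W t (W' t)) ->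
  (forall t, 0 < t <= T -> W' t <= K * W t) ->
  (forall t, 0 <= t -> 0 <= W t) -> small0 W ->
  forall t, 0 < t <= T -> W t = 0.
Proof.
  intros HK Hd HW Hnn Hsmall t Ht.
  set (h := fun s => W s * exp (- K * s)).
  assert (Hle : forall s, 0 < s < t -> h t <= W s).
  { intros s Hs.
    assert (h t <= h s).
    { apply (derive_nonpos_le h (fun s => (W' s + - K * W s) * exp (- K * s))); [lra| |].
      - intros c Hc. apply derivable_pt_lim_mult_exp, Hd. lra.
      - intros c Hc. specialize (HW c ltac:(lra)). pose proof (exp_pos (- K * c)). nra. }
    unfold h in *. assert (exp (- K * s) <= 1) by (apply exp_le_1; nra).
    specialize (Hnn s ltac:(lra)). nra. }
  assert (h t <= 0) by exact (small0_ge W t (h t) Hsmall ltac:(lra) Hle).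
  unfold h in H. pose proof (exp_pos (- K * t)). specialize (Hnn t ltac:(lra)). nra.
Qed.

Lemma bounded_on_0T f f' : right_cont0 f ->
  (forall t, 0 < t -> derivable_pt_lim f t (f' t)) ->
  forall T, exists B, forall t, 0 <= t <= T -> Rabs (f t) <= B.
Proof.
  intros Hrc Hd T. destruct (Hrc 1 ltac:(lra)) as [del [Hdel H1]].
  assert (Hnear : forall t, 0 <= t < del -> Rabs (f t) <= Rabs (f 0) + 1).
  { intros t Ht. specialize (H1 t Ht). pose proof (Rabs_triang_inv (f t) (f 0)). lra. }
  assert (Hc : forall c, 0 < c -> continuity_pt f c).
  { intros c Hc. apply derivable_continuous_pt. exists (f' c). apply Hd; auto. }
  destruct (Rlt_or_le T (del / 2)) as [HT|HT].
  - exists (Rabs (f 0) + 1). intros t Ht. apply Hnear. lra.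
  - destruct (continuity_ab_maj f (del / 2) T HT) as [M1 [HM1 _]]; [intros; apply Hc; lra|].
    destruct (continuity_ab_maj (fun t => - f t) (del / 2) T HT) as [M2 [HM2 _]];
      [intros; apply continuity_pt_opp, Hc; lra|].
    exists (Rabs (f 0) + 1 + Rabs (f M1) + Rabs (f M2)). intros t Ht.
    pose proof (Rabs_pos (f 0)); pose proof (Rabs_pos (f M1)); pose proof (Rabs_pos (f M2)).
    destruct (Rlt_or_le t (del / 2)); [specialize (Hnear t ltac:(lra)); lra|].
    specialize (HM1 t ltac:(lra)). specialize (HM2 t ltac:(lra)). simpl in HM2.
    pose proof (Rle_abs (f M1)). pose proof (Rle_abs (- f M2)). rewrite Rabs_Ropp in *.
    apply Rabs_le; lra.
Qed.

(** * Limits at infinity and Barbalat's lemma *)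

Lemma lim_infty_const c : lim_infty (fun _ => c) c.
Proof. intros eps H. exists 0. intros. rewrite Rminus_diag, Rabs_R0; lra. Qed.

Lemma lim_infty_ext (f g : R -> R) l T0 :
  (forall t, T0 <= t -> f t = g t) -> lim_infty f l -> lim_infty g l.
Proof.
  intros He Hl eps H. destruct (Hl eps H) as [T HT]. exists (Rmax T T0). intros t Ht.
  pose proof (Rmax_l T T0). pose proof (Rmax_r T T0).
  rewrite <- He by lra. apply HT; lra.
Qed.

Lemma lim_infty_plus f g l m :
  lim_infty f l -> lim_infty g m -> lim_infty (fun t => f t + g t) (l + m).
Proof.
  intros Hf Hg eps H.
  destruct (Hf (eps / 2)) as [T1 H1]; [lra|]. destruct (Hg (eps / 2)) as [T2 H2]; [lra|].
  exists (Rmax T1 T2). intros t Ht. pose proof (Rmax_l T1 T2). pose proof (Rmax_r T1 T2).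
  specialize (H1 t ltac:(lra)). specialize (H2 t ltac:(lra)).
  replace (f t + g t - (l + m)) with ((f t - l) + (g t - m)) by ring.
  eapply Rle_lt_trans; [apply Rabs_triang|lra].
Qed.

Lemma lim_infty_mult f g l m :
  lim_infty f l -> lim_infty g m -> lim_infty (fun t => f t * g t) (l * m).
Proof.
  intros Hf Hg eps H.
  set (e := Rmin 1 (eps / (Rabs l + Rabs m + 2))).
  pose proof (Rabs_pos l) as Hl0; pose proof (Rabs_pos m) as Hm0.
  assert (He : 0 < e /\ e <= 1 /\ e * (Rabs l + Rabs m + 2) <= eps).
  { unfold e. repeat split; [apply Rmin_glb_lt; [lra|apply Rdiv_lt_0_compat; lra]|apply Rmin_l|].
    apply Rle_trans with ((eps / (Rabs l + Rabs m + 2)) * (Rabs l + Rabs m + 2));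
      [apply Rmult_le_compat_r; [lra|apply Rmin_r]|right; field; lra]. }
  destruct (Hf (e / 2)) as [T1 H1]; [lra|]. destruct (Hg (e / 2)) as [T2 H2]; [lra|].
  exists (Rmax T1 T2). intros t Ht. pose proof (Rmax_l T1 T2). pose proof (Rmax_r T1 T2).
  specialize (H1 t ltac:(lra)). specialize (H2 t ltac:(lra)).
  replace (f t * g t - l * m) with ((f t - l) * (g t - m) + l * (g t - m) + m * (f t - l)) by ring.
  eapply Rle_lt_trans; [eapply Rle_trans; [apply Rabs_triang|apply Rplus_le_compat_r, Rabs_triang]|].
  rewrite !Rabs_mult. pose proof (Rabs_pos (f t - l)); pose proof (Rabs_pos (g t - m)).
  assert (Rabs (f t - l) * Rabs (g t - m) <= e / 2 * (e / 2)) by (apply Rmult_le_compat; lra).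
  assert (Rabs l * Rabs (g t - m) <= Rabs l * (e / 2)) by (apply Rmult_le_compat_l; lra).
  assert (Rabs m * Rabs (f t - l) <= Rabs m * (e / 2)) by (apply Rmult_le_compat_l; lra).
  nra.
Qed.

Lemma lim_infty_scal c f l : lim_infty f l -> lim_infty (fun t => c * f t) (c * l).
Proof. intros Hf. exact (lim_infty_mult _ _ _ _ (lim_infty_const c) Hf). Qed.

Lemma lim_infty_minus f g l m :
  lim_infty f l -> lim_infty g m -> lim_infty (fun t => f t - g t) (l - m).
Proof.
  intros Hf Hg. replace (l - m) with (l + -1 * m) by ring.
  apply (lim_infty_ext (fun t => f t + -1 * g t)) with 0;
    [intros; ring|apply lim_infty_plus; [|apply lim_infty_scal]; auto].
Qed.

Lemma lim_infty_inv f l : l <> 0 -> lim_infty f l -> lim_infty (fun t => / f t) (/ l).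
Proof.
  intros Hl Hf eps H. assert (Hal : 0 < Rabs l) by (apply Rabs_pos_lt; auto).
  set (e := Rmin (Rabs l / 2) (eps * (Rabs l * Rabs l) / 2)).
  assert (He : 0 < e /\ e <= Rabs l / 2 /\ e <= eps * (Rabs l * Rabs l) / 2).
  { unfold e. split; [|split; [apply Rmin_l|apply Rmin_r]].
    apply Rmin_glb_lt; [lra|]. assert (0 < Rabs l * Rabs l) by nra. nra. }
  destruct (Hf e) as [T HT]; [lra|]. exists T. intros t Ht. specialize (HT t Ht).
  assert (Rabs (f t) >= Rabs l / 2).
  { pose proof (Rabs_triang_inv l (f t)). rewrite Rabs_minus_sym in HT. lra. }
  assert (Hft : f t <> 0) by (intro Hz; rewrite Hz, Rabs_R0 in H0; lra).
  replace (/ f t - / l) with ((l - f t) / (f t * l)) by (field; auto).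
  unfold Rdiv. rewrite Rabs_mult, Rabs_inv, Rabs_mult, <- Rabs_Ropp, Ropp_minus_distr.
  apply Rmult_lt_reg_r with (Rabs (f t) * Rabs l); [nra|].
  rewrite Rmult_assoc, Rinv_l, Rmult_1_r by nra.
  assert (Rabs l / 2 * Rabs l <= Rabs (f t) * Rabs l) by (apply Rmult_le_compat_r; lra).
  nra.
Qed.

Lemma lim_infty_of_sqr f l : lim_infty (fun t => (f t - l) * (f t - l)) 0 -> lim_infty f l.
Proof.
  intros H eps He. destruct (H (eps * eps)) as [T HT]; [nra|]. exists T. intros t Ht.
  specialize (HT t Ht). rewrite Rminus_0_r, Rabs_right in HT by (apply Rle_ge, Rle_0_sqr).
  destruct (Rlt_or_le (Rabs (f t - l)) eps) as [|Hge]; auto. exfalso.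
  assert (eps * eps <= Rabs (f t - l) * Rabs (f t - l)) by (apply Rmult_le_compat; lra).
  rewrite <- Rabs_mult, Rabs_right in H0 by (apply Rle_ge, Rle_0_sqr). lra.
Qed.

Lemma Rabs_le_between a b : Rabs a <= b -> - b <= a <= b.
Proof. intros H. pose proof (Rle_abs a). pose proof (Rle_abs (- a)). rewrite Rabs_Ropp in *. lra.
Qed.

Definition lipschitz_from t0 (f : R -> R) : Prop :=
  exists K, forall t s, t0 <= t -> t0 <= s -> Rabs (f t - f s) <= K * Rabs (t - s).
Definition bounded_from t0 (f : R -> R) : Prop :=
  exists B, forall t, t0 <= t -> Rabs (f t) <= B.
Definition lip_bounded t0 f : Prop := lipschitz_from t0 f /\ bounded_from t0 f.

Lemma lipschitz_from_pos t0 f : lipschitz_from t0 f -> exists K, 0 < K /\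
  forall t s, t0 <= t -> t0 <= s -> Rabs (f t - f s) <= K * Rabs (t - s).
Proof.
  intros [K HK]. exists (Rabs K + 1). split; [pose proof (Rabs_pos K); lra|].
  intros t s Ht Hs. eapply Rle_trans; [apply HK; auto|].
  apply Rmult_le_compat_r; [apply Rabs_pos|pose proof (Rle_abs K); lra].
Qed.

Lemma bounded_from_of_bounds t0 f a b : (forall t, t0 <= t -> a <= f t <= b) -> bounded_from t0 f.
Proof.
  intros H. exists (Rabs a + Rabs b). intros t Ht. specialize (H t Ht).
  pose proof (Rle_abs a); pose proof (Rle_abs (- a)); pose proof (Rle_abs b); pose proof (Rle_abs (- b)).
  rewrite Rabs_Ropp in *. apply Rabs_le; lra.
Qed.

Lemma lip_bounded_const t0 c : lip_bounded t0 (fun _ => c).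
Proof.
  split; [exists 0; intros; rewrite Rminus_diag, Rabs_R0; lra|exists (Rabs c); intros; lra].
Qed.

Lemma lip_bounded_ext t0 f g : (forall t, t0 <= t -> f t = g t) ->
  lip_bounded t0 f -> lip_bounded t0 g.
Proof.
  intros He [[K HK] [B HB]]. split.
  - exists K. intros t s Ht Hs. rewrite <- !He by auto. auto.
  - exists B. intros t Ht. rewrite <- He; auto.
Qed.

Lemma lip_bounded_plus t0 f g : lip_bounded t0 f -> lip_bounded t0 g ->
  lip_bounded t0 (fun t => f t + g t).
Proof.
  intros [[K1 H1] [B1 G1]] [[K2 H2] [B2 G2]]. split.
  - exists (K1 + K2). intros t s Ht Hs.
    replace (f t + g t - (f s + g s)) with ((f t - f s) + (g t - g s)) by ring.
    eapply Rle_trans; [apply Rabs_triang|]. specialize (H1 t s Ht Hs); specialize (H2 t s Ht Hs).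
    lra.
  - exists (B1 + B2). intros t Ht. eapply Rle_trans; [apply Rabs_triang|].
    specialize (G1 t Ht); specialize (G2 t Ht); lra.
Qed.

Lemma lip_bounded_mult t0 f g : lip_bounded t0 f -> lip_bounded t0 g ->
  lip_bounded t0 (fun t => f t * g t).
Proof.
  intros [[K1 H1] [B1 G1]] [[K2 H2] [B2 G2]]. split.
  - exists (B1 * K2 + B2 * K1). intros t s Ht Hs.
    replace (f t * g t - f s * g s) with (f t * (g t - g s) + g s * (f t - f s)) by ring.
    eapply Rle_trans; [apply Rabs_triang|]. rewrite !Rabs_mult.
    specialize (H1 t s Ht Hs); specialize (H2 t s Ht Hs); specialize (G1 t Ht); specialize (G2 s Hs).
    pose proof (Rabs_pos (f t)); pose proof (Rabs_pos (g s)).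
    pose proof (Rabs_pos (g t - g s)); pose proof (Rabs_pos (f t - f s)).
    assert (Rabs (f t) * Rabs (g t - g s) <= B1 * (K2 * Rabs (t - s))) by (apply Rmult_le_compat; lra).
    assert (Rabs (g s) * Rabs (f t - f s) <= B2 * (K1 * Rabs (t - s))) by (apply Rmult_le_compat; lra).
    lra.
  - exists (B1 * B2). intros t Ht. rewrite Rabs_mult. specialize (G1 t Ht); specialize (G2 t Ht).
    apply Rmult_le_compat; auto; apply Rabs_pos.
Qed.

Lemma lip_bounded_scal t0 c f : lip_bounded t0 f -> lip_bounded t0 (fun t => c * f t).
Proof. apply lip_bounded_mult, lip_bounded_const. Qed.

Lemma lip_bounded_minus t0 f g : lip_bounded t0 f -> lip_bounded t0 g ->
  lip_bounded t0 (fun t => f t - g t).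
Proof.
  intros Hf Hg. apply lip_bounded_ext with (fun t => f t + -1 * g t); [intros; ring|].
  apply lip_bounded_plus, lip_bounded_scal; auto.
Qed.

Lemma lip_bounded_sumk t0 n (F : nat -> R -> R) :
  (forall k, (1 <= k <= n)%nat -> lip_bounded t0 (F k)) ->
  lip_bounded t0 (fun t => sumk n (fun k => F k t)).
Proof.
  induction n; intros H; simpl; [apply lip_bounded_const|].
  apply (lip_bounded_plus t0 (fun t => sumk n (fun k => F k t)) (F (S n)));
    [apply IHn; intros|]; apply H; lia.
Qed.

Lemma lip_bounded_inv t0 f m : 0 < m -> (forall t, t0 <= t -> m <= f t) ->
  lip_bounded t0 f -> lip_bounded t0 (fun t => / f t).
Proof.
  intros Hm Hfm [[K1 H1] _]. split.
  - exists (K1 / (m * m)). intros t s Ht Hs.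
    pose proof (Hfm t Ht). pose proof (Hfm s Hs). specialize (H1 t s Ht Hs).
    replace (/ f t - / f s) with ((f s - f t) / (f t * f s)) by (field; lra).
    unfold Rdiv. rewrite Rabs_mult, Rabs_inv, Rabs_minus_sym, (Rabs_right (f t * f s)) by nra.
    assert (/ (f t * f s) <= / (m * m)) by (apply Rinv_le_contravar; [nra|apply Rmult_le_compat; lra]).
    pose proof (Rabs_pos (f t - f s)). pose proof (Rabs_pos (t - s)).
    assert (0 < / (f t * f s)) by (apply Rinv_0_lt_compat; nra).
    assert (Rabs (f t - f s) * / (f t * f s) <= K1 * Rabs (t - s) * / (m * m))
      by (apply Rmult_le_compat; lra).
    lra.
  - exists (/ m). intros t Ht. specialize (Hfm t Ht).
    rewrite Rabs_right by (apply Rle_ge; left; apply Rinv_0_lt_compat; lra).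
    apply Rinv_le_contravar; lra.
Qed.

Lemma lip_bounded_div t0 f g m : 0 < m -> (forall t, t0 <= t -> m <= g t) ->
  lip_bounded t0 f -> lip_bounded t0 g -> lip_bounded t0 (fun t => f t / g t).
Proof. intros. apply (lip_bounded_mult t0 f (fun t => / g t)); auto.
now apply lip_bounded_inv with m. Qed.

Lemma ln_le_sub1 u : 0 < u -> ln u <= u - 1.
Proof. intros H. pose proof (exp_ineq1_le (ln u)). rewrite exp_ln in H0; auto. lra. Qed.

Lemma ln_lt_sub1 u : 0 < u -> u <> 1 -> ln u < u - 1.
Proof.
  intros H H1. assert (ln u <> 0) by (apply ln_neq_0; auto).
  pose proof (exp_ineq1 (ln u) H0). rewrite exp_ln in H2; auto. lra.
Qed.

Lemma ln_div a b : 0 < a -> 0 < b -> ln (a / b) = ln a - ln b.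
Proof.
  intros. unfold Rdiv. rewrite ln_mult, ln_Rinv; auto with real.
Qed.

Lemma Rabs_ln_sub_le a b m : 0 < m -> m <= a -> m <= b -> Rabs (ln a - ln b) <= Rabs (a - b) / m.
Proof.
  intros Hm Ha Hb.
  assert (Hxy : forall x y, m <= x -> m <= y -> ln x - ln y <= Rabs (x - y) / m).
  { intros x y Hx Hy. rewrite <- ln_div by lra.
    eapply Rle_trans; [apply ln_le_sub1, Rdiv_lt_0_compat; lra|].
    replace (x / y - 1) with ((x - y) / y) by (field; lra). unfold Rdiv.
    apply Rle_trans with (Rabs (x - y) * / y);
      [apply Rmult_le_compat_r; [left; apply Rinv_0_lt_compat; lra|apply Rle_abs]|].
    apply Rmult_le_compat_l; [apply Rabs_pos|apply Rinv_le_contravar; lra]. }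
  pose proof (Hxy b a Hb Ha). pose proof (Hxy a b Ha Hb).
  rewrite Rabs_minus_sym in H. apply Rabs_le. split; lra.
Qed.

Lemma lip_bounded_ln t0 f m : 0 < m -> (forall t, t0 <= t -> m <= f t) ->
  lip_bounded t0 f -> lip_bounded t0 (fun t => ln (f t)).
Proof.
  intros Hm Hfm [[K1 H1] [B1 G1]]. split.
  - exists (K1 / m). intros t s Ht Hs.
    eapply Rle_trans; [apply (Rabs_ln_sub_le (f t) (f s) m); auto|].
    replace (K1 / m * Rabs (t - s)) with (K1 * Rabs (t - s) / m) by (field; lra).
    apply Rmult_le_compat_r; [left; apply Rinv_0_lt_compat; lra|]. auto.
  - exists (Rabs (ln m) + B1). intros t Ht. specialize (Hfm t Ht) as Hf. specialize (G1 t Ht).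
    assert (ln m <= ln (f t)).
    { destruct (Rle_lt_or_eq_dec m (f t) Hf) as [Hl|Heq]; [|rewrite Heq; lra].
      left; apply ln_increasing; lra. }
    pose proof (ln_le_sub1 (f t) ltac:(lra)). pose proof (Rle_abs (f t)).
    pose proof (Rle_abs (- ln m)). pose proof (Rabs_pos (ln m)).
    rewrite Rabs_Ropp in *. apply Rabs_le; split; lra.
Qed.

Lemma lip_bounded_of_derive t0 f f' : (forall t, t0 <= t -> derivable_pt_lim f t (f' t)) ->
  bounded_from t0 f' -> bounded_from t0 f -> lip_bounded t0 f.
Proof.
  intros Hd [K HK] Hb. split; auto. exists K.
  assert (Hlt : forall t s, t0 <= t -> t < s -> Rabs (f s - f t) <= K * Rabs (s - t)).
  { intros t s Ht Hts. rewrite (Rabs_right (s - t)) by lra.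
    apply (increment_le_of_derive_bound f f'); auto; intros; [apply Hd|apply HK]; lra. }
  intros t s Ht Hs. destruct (Rtotal_order t s) as [Hts|[<-|Hst]].
  - rewrite (Rabs_minus_sym (f t)), (Rabs_minus_sym t). auto.
  - rewrite !Rminus_diag, Rabs_R0. lra.
  - auto.
Qed.

(* Each visit of [F] above [eps] costs the nonnegative [h] a fixed amount, since [F]
   stays above [eps / 2] on a window of length [eps / (2 K)]. *)
Lemma barbalat_lyapunov (h h' F : R -> R) t0 :
  (forall t, t0 <= t -> derivable_pt_lim h t (h' t)) ->
  (forall t, t0 <= t -> h' t <= - F t) ->
  (forall t, t0 <= t -> 0 <= F t) -> (forall t, t0 <= t -> 0 <= h t) ->
  lipschitz_from t0 F -> lim_infty F 0.
Proof.
  intros Hd Hh' HF Hh HL. destruct (lipschitz_from_pos _ _ HL) as [K [HK HKL]].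
  intros eps Heps. apply NNPP; intro Hn.
  assert (Hfreq : forall T, exists t, T <= t /\ t0 <= t /\ eps <= F t).
  { intros T. apply NNPP; intro H2. apply Hn. exists (Rmax T t0). intros t Ht.
    pose proof (Rmax_l T t0). pose proof (Rmax_r T t0).
    destruct (Rlt_or_le (F t) eps).
    - rewrite Rminus_0_r, Rabs_right by (apply Rle_ge, HF; lra). auto.
    - exfalso; apply H2; exists t; repeat split; lra. }
  set (del := eps / (2 * K)). assert (Hdel : 0 < del) by (apply Rdiv_lt_0_compat; lra).
  set (c := eps * del / 2). assert (Hc : 0 < c) by (unfold c; nra).
  assert (Hmono : forall a b, t0 <= a -> a <= b -> h b <= h a).
  { intros a b Ha Hb. destruct (Rle_lt_or_eq_dec a b Hb) as [Hab| <-]; [|lra].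
    apply (derive_nonpos_le h h'); auto; intros x Hx; [apply Hd|];
      [|specialize (Hh' x ltac:(lra)); specialize (HF x ltac:(lra))]; lra. }
  assert (Hwindow : forall t, t0 <= t -> eps <= F t -> h (t + del) - h t <= - c).
  { intros t Ht HFt. destruct (MVT_cor2 h h' t (t + del)) as [xi [Hxi Hxi2]];
      [lra|intros; apply Hd; lra|].
    rewrite Hxi. specialize (Hh' xi ltac:(lra)). specialize (HKL xi t ltac:(lra) ltac:(lra)).
    rewrite (Rabs_right (xi - t)) in HKL by lra. apply Rabs_le_between in HKL.
    assert (K * (xi - t) <= K * del) by (apply Rmult_le_compat_l; lra).
    assert (K * del = eps / 2) by (unfold del; field; lra).
    replace (t + del - t) with del by ring. unfold c. nra. }
  assert (Hdescent : forall N : nat, exists t, t0 <= t /\ h t <= h t0 - INR N * c).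
  { induction N as [|N [tN [HtN HhN]]]; [exists t0; simpl; lra|].
    destruct (Hfreq tN) as [t [Ht1 [Ht2 Ht3]]]. exists (t + del). split; [lra|].
    specialize (Hwindow t Ht2 Ht3). specialize (Hmono tN t HtN Ht1). rewrite S_INR. lra. }
  destruct (archimed (h t0 / c)) as [Har _].
  assert (Hup : (0 <= up (h t0 / c))%Z).
  { apply le_IZR. specialize (Hh t0 (Rle_refl _)).
    assert (0 <= h t0 / c) by (apply Rmult_le_pos; [|left; apply Rinv_0_lt_compat]; lra). lra. }
  destruct (Hdescent (Z.to_nat (up (h t0 / c)))) as [t [Ht Hht]].
  rewrite INR_IZR_INZ, Z2Nat.id in Hht by exact Hup.
  specialize (Hh t Ht). assert (h t0 / c * c = h t0) by (field; lra).
  assert (h t0 / c * c < IZR (up (h t0 / c)) * c) by (apply Rmult_lt_compat_r; auto). lra.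
Qed.

Lemma barbalat_derive (f u : R -> R) t0 l :
  (forall t, t0 <= t -> derivable_pt_lim f t (u t)) -> lim_infty f l ->
  lipschitz_from t0 u -> lim_infty u 0.
Proof.
  intros Hd Hl HL. destruct (lipschitz_from_pos _ _ HL) as [K [HK HKL]].
  intros eps Heps.
  set (del := eps / (2 * K)). assert (Hdel : 0 < del) by (apply Rdiv_lt_0_compat; lra).
  destruct (Hl (eps * del / 4)) as [T HT]; [nra|].
  exists (Rmax T t0). intros t Ht. pose proof (Rmax_l T t0). pose proof (Rmax_r T t0).
  rewrite Rminus_0_r. destruct (Rlt_or_le (Rabs (u t)) eps) as [|Hge]; auto. exfalso.
  destruct (MVT_cor2 f u t (t + del)) as [xi [Hxi Hxi2]]; [lra|intros; apply Hd; lra|].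
  specialize (HKL xi t ltac:(lra) ltac:(lra)). rewrite (Rabs_right (xi - t)) in HKL by lra.
  assert (K * (xi - t) <= K * del) by (apply Rmult_le_compat_l; lra).
  assert (K * del = eps / 2) by (unfold del; field; lra).
  assert (Rabs (u xi) >= eps / 2).
  { pose proof (Rabs_triang_inv (u t) (u xi)). rewrite <- Rabs_Ropp, Ropp_minus_distr in HKL. lra. }
  assert (Rabs (f (t + del) - f t) >= eps * del / 2).
  { rewrite Hxi. replace (t + del - t) with del by ring.
    rewrite Rabs_mult, (Rabs_right del) by lra. nra. }
  specialize (HT (t + del) ltac:(lra)) as HT1. specialize (HT t ltac:(lra)) as HT2.
  assert (Rabs (f (t + del) - f t) <= Rabs (f (t + del) - l) + Rabs (f t - l)).
  { replace (f (t + del) - f t) with ((f (t + del) - l) - (f t - l)) by ring.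
    eapply Rle_trans; [apply Rabs_triang|]. rewrite Rabs_Ropp; lra. }
  lra.
Qed.

(** * Squared negative parts *)

Definition negsq (x : R) : R := Rmin x 0 * Rmin x 0.

Lemma negsq_ge0 x : 0 <= negsq x.
Proof. apply Rle_0_sqr. Qed.

Lemma negsq_le0_inv x : negsq x <= 0 -> 0 <= x.
Proof.
  unfold negsq, Rmin. destruct (Rle_dec x 0); intros H; [|lra].
  destruct (Rle_lt_or_eq_dec x 0 r); [|lra]. nra.
Qed.

Lemma negsq_le_sqr x y : 0 <= y -> negsq x <= (x - y) * (x - y).
Proof.
  intros H. pose proof (Rle_0_sqr (x - y)). unfold Rsqr in *.
  unfold negsq, Rmin. destruct (Rle_dec x 0); nra.
Qed.

Lemma Rmin0_mul_self x : Rmin x 0 * x = negsq x.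
Proof. unfold negsq, Rmin. destruct (Rle_dec x 0); ring. Qed.

Lemma derivable_pt_lim_negsq x : derivable_pt_lim negsq x (2 * Rmin x 0).
Proof.
  assert (Hquad : forall a b, Rabs (negsq b - negsq a - 2 * Rmin a 0 * (b - a)) <= (b - a) * (b - a)).
  { intros a b. pose proof (Rle_0_sqr (b - a)). pose proof (Rle_0_sqr b). pose proof (Rle_0_sqr a).
    unfold Rsqr, negsq, Rmin in *.
    destruct (Rle_dec a 0); destruct (Rle_dec b 0); apply Rabs_le.
    - split; nra.
    - assert (0 <= - a * b) by (apply Rmult_le_pos; lra). split; nra.
    - assert (0 <= a * - b) by (apply Rmult_le_pos; lra). split; nra.
    - split; nra. }
  intros eps Heps. exists (mkposreal eps Heps). intros h Hh Hha. simpl in Hha.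
  specialize (Hquad x (x + h)). replace (x + h - x) with h in Hquad by ring.
  replace ((negsq (x + h) - negsq x) / h - 2 * Rmin x 0)
    with ((negsq (x + h) - negsq x - 2 * Rmin x 0 * h) / h) by (field; auto).
  unfold Rdiv. rewrite Rabs_mult, Rabs_inv.
  apply Rle_lt_trans with (Rabs h); [|auto].
  apply Rmult_le_reg_r with (Rabs h); [apply Rabs_pos_lt; auto|].
  rewrite Rmult_assoc, Rinv_l, Rmult_1_r, <- Rabs_mult, (Rabs_right (h * h))
    by (try apply Rabs_no_R0; try apply Rle_ge, Rle_0_sqr; auto).
  exact Hquad.
Qed.

Lemma Rmin0_mul_le x y : Rmin x 0 * y <= (negsq x + negsq y) / 2.
Proof.
  unfold negsq. pose proof (Rmin_l x 0). pose proof (Rmin_r x 0).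
  pose proof (Rmin_l y 0). pose proof (Rmin_r y 0).
  assert (Rmin x 0 * y <= Rmin x 0 * Rmin y 0) by nra.
  pose proof (Rle_0_sqr (Rmin x 0 - Rmin y 0)). unfold Rsqr in *. nra.
Qed.

Lemma mul_ge_Rmin0 x y B C : Rabs x <= B -> Rabs y <= C ->
  C * Rmin x 0 + B * Rmin y 0 <= y * x.
Proof.
  intros Hx Hy. apply Rabs_le_between in Hx. apply Rabs_le_between in Hy. unfold Rmin.
  destruct (Rle_dec x 0); destruct (Rle_dec y 0); nra.
Qed.

Lemma negsq_rates_combine a1 a2 a3 a4 ga et om mu be nS nV nI nQ nTh xS xV xI xQ :
  0 <= a1 -> 0 <= a2 -> 0 <= a3 -> 0 <= a4 -> 0 <= ga -> 0 <= et -> 0 <= om -> 0 <= mu -> 0 <= be ->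
  0 <= nS -> 0 <= nV -> 0 <= nI -> 0 <= nQ ->
  xS <= 2 * a1 * nS + ga * (nS + nI) + et * (nS + nQ) + om * (nS + nV) ->
  xV <= mu * (nV + nS) + 2 * a2 * nV ->
  xI <= a1 * (nI + nS) + a3 * (nI + nTh) + a2 * (nI + nV) + a4 * (nI + nTh) ->
  xQ <= be * (nQ + nI) ->
  xS + xV + xI + xQ <= 8 * (a1 + a2 + a3 + a4 + ga + et + om + mu + be) * (nS + nV + nI + nQ)
    + (a3 + a4) * nTh.
Proof. intros. nra. Qed.

Section NegativePartEstimates.
Variables (L la mu ga et om de be d B TB S V I Q Th : R).
Hypotheses (HL : 0 < L) (Hla : 0 < la) (Hmu : 0 < mu) (Hga : 0 < ga) (Het : 0 < et)
  (Hom : 0 < om) (Hde : 0 <= de) (Hbe : 0 < be) (Hd : 0 < d).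
Hypotheses (HS : Rabs S <= B) (HV : Rabs V <= B) (HTh : Rabs Th <= TB).

Lemma negsq_fS_le :
  2 * (Rmin S 0 * fS L la mu ga et om d Th S V I Q) <=
  2 * (la * TB) * negsq S + ga * (negsq S + negsq I) + et * (negsq S + negsq Q)
  + om * (negsq S + negsq V).
Proof.
  unfold fS. pose proof (Rmin_r S 0). pose proof (Rabs_le_between _ _ HTh).
  pose proof (Rmin0_mul_le S I). pose proof (Rmin0_mul_le S Q). pose proof (Rmin0_mul_le S V).
  pose proof (Rmin0_mul_self S) as HSS. pose proof (negsq_ge0 S).
  replace (Rmin S 0 * (L - la * S * Th + ga * I + et * Q + om * V - (mu + d) * S))
    with (Rmin S 0 * L - la * Th * (Rmin S 0 * S) + ga * (Rmin S 0 * I) + et * (Rmin S 0 * Q)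
          + om * (Rmin S 0 * V) - (mu + d) * (Rmin S 0 * S)) by ring.
  assert (Rmin S 0 * L <= 0) by nra.
  assert (- (la * Th * negsq S) <= la * TB * negsq S) by (assert (0 <= la * negsq S) by nra; nra).
  assert (ga * (Rmin S 0 * I) <= ga * ((negsq S + negsq I) / 2)) by (apply Rmult_le_compat_l; lra).
  assert (et * (Rmin S 0 * Q) <= et * ((negsq S + negsq Q) / 2)) by (apply Rmult_le_compat_l; lra).
  assert (om * (Rmin S 0 * V) <= om * ((negsq S + negsq V) / 2)) by (apply Rmult_le_compat_l; lra).
  assert (0 <= (mu + d) * negsq S) by nra.
  rewrite HSS. lra.
Qed.

Lemma negsq_fV_le :
  2 * (Rmin V 0 * fV la mu de om d Th S V) <= mu * (negsq V + negsq S) + 2 * (de * la * TB) * negsq V.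
Proof.
  unfold fV. pose proof (Rabs_le_between _ _ HTh).
  pose proof (Rmin0_mul_le V S). pose proof (Rmin0_mul_self V) as HVV. pose proof (negsq_ge0 V).
  replace (Rmin V 0 * (mu * S - de * la * V * Th - (d + om) * V))
    with (mu * (Rmin V 0 * S) - de * la * Th * (Rmin V 0 * V) - (d + om) * (Rmin V 0 * V)) by ring.
  rewrite HVV.
  assert (mu * (Rmin V 0 * S) <= mu * ((negsq V + negsq S) / 2)) by (apply Rmult_le_compat_l; lra).
  assert (- (de * la * Th * negsq V) <= de * la * TB * negsq V)
    by (assert (0 <= de * la * negsq V) by (apply Rmult_le_pos; [apply Rmult_le_pos|]; lra); nra).
  assert (0 <= (d + om) * negsq V) by nra.
  lra.
Qed.

Lemma negsq_fI_le :
  2 * (Rmin I 0 * fI la de ga be d Th S V I) <=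
  la * TB * (negsq I + negsq S) + la * B * (negsq I + negsq Th)
  + de * la * TB * (negsq I + negsq V) + de * la * B * (negsq I + negsq Th).
Proof.
  unfold fI. pose proof (Rmin_r I 0). pose proof (Rabs_pos S). pose proof (Rabs_pos Th).
  pose proof (mul_ge_Rmin0 S Th B TB HS HTh). pose proof (mul_ge_Rmin0 V Th B TB HV HTh).
  assert (Rmin I 0 * (Th * S) <= TB * (Rmin I 0 * Rmin S 0) + B * (Rmin I 0 * Rmin Th 0)) by nra.
  assert (Rmin I 0 * (Th * V) <= TB * (Rmin I 0 * Rmin V 0) + B * (Rmin I 0 * Rmin Th 0)) by nra.
  pose proof (Rmin0_mul_le I (Rmin S 0)). pose proof (Rmin0_mul_le I (Rmin V 0)).
  pose proof (Rmin0_mul_le I (Rmin Th 0)).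
  assert (Hn : forall x, negsq (Rmin x 0) = negsq x)
    by (intros x; unfold negsq; rewrite (Rmin_left (Rmin x 0) 0) by apply Rmin_r; reflexivity).
  rewrite !Hn in *. pose proof (Rmin0_mul_self I) as HII. pose proof (negsq_ge0 I).
  replace (Rmin I 0 * (la * S * Th + de * la * V * Th - (ga + be + d) * I))
    with (la * (Rmin I 0 * (Th * S)) + de * la * (Rmin I 0 * (Th * V))
          - (ga + be + d) * (Rmin I 0 * I)) by ring.
  rewrite HII. assert (0 <= de * la) by nra. pose proof (Rabs_pos V).
  assert (0 <= B) by lra. assert (0 <= TB) by lra.
  assert (TB * (Rmin I 0 * Rmin S 0) <= TB * ((negsq I + negsq S) / 2))
    by (apply Rmult_le_compat_l; lra).
  assert (TB * (Rmin I 0 * Rmin V 0) <= TB * ((negsq I + negsq V) / 2))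
    by (apply Rmult_le_compat_l; lra).
  assert (B * (Rmin I 0 * Rmin Th 0) <= B * ((negsq I + negsq Th) / 2))
    by (apply Rmult_le_compat_l; lra).
  assert (la * (Rmin I 0 * (Th * S))
          <= la * (TB * ((negsq I + negsq S) / 2) + B * ((negsq I + negsq Th) / 2)))
    by (apply Rmult_le_compat_l; lra).
  assert (de * la * (Rmin I 0 * (Th * V))
          <= de * la * (TB * ((negsq I + negsq V) / 2) + B * ((negsq I + negsq Th) / 2)))
    by (apply Rmult_le_compat_l; lra).
  assert (0 <= (ga + be + d) * negsq I) by nra.
  lra.
Qed.

Lemma negsq_fQ_le : 2 * (Rmin Q 0 * fQ be et d I Q) <= be * (negsq Q + negsq I).
Proof.
  unfold fQ. pose proof (Rmin0_mul_le Q I). pose proof (Rmin0_mul_self Q). pose proof (negsq_ge0 Q).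
  replace (Rmin Q 0 * (be * I - (et + d) * Q)) with (be * (Rmin Q 0 * I) - (et + d) * (Rmin Q 0 * Q))
    by ring.
  nra.
Qed.

Lemma negsq_sum_derive_le :
  2 * (Rmin S 0 * fS L la mu ga et om d Th S V I Q + Rmin V 0 * fV la mu de om d Th S V
       + Rmin I 0 * fI la de ga be d Th S V I + Rmin Q 0 * fQ be et d I Q)
  <= 8 * (la * TB + de * la * TB + la * B + de * la * B + ga + et + om + mu + be)
       * (negsq S + negsq V + negsq I + negsq Q)
     + (la * B + de * la * B) * negsq Th.
Proof.
  assert (0 <= de * la) by nra. pose proof (Rabs_pos S). pose proof (Rabs_pos Th).
  match goal with |- 2 * (?a + ?b + ?c + ?e) <= _ =>
    replace (2 * (a + b + c + e)) with (2 * a + 2 * b + 2 * c + 2 * e) by ring end.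
  apply (negsq_rates_combine (la * TB) (de * la * TB) (la * B) (de * la * B) ga et om mu be);
    auto using negsq_ge0, negsq_fS_le, negsq_fV_le, negsq_fI_le, negsq_fQ_le;
    try apply Rmult_le_pos; lra.
Qed.

End NegativePartEstimates.

(** * The Volterra function and the Lyapunov derivative *)

Definition volterra (u : R) : R := u - 1 - ln u.

Lemma volterra_ge0 u : 0 < u -> 0 <= volterra u.
Proof. intros H. unfold volterra. pose proof (ln_le_sub1 u H). lra. Qed.

Lemma volterra_gt0 u : 0 < u -> u <> 1 -> 0 < volterra u.
Proof. intros H H1. unfold volterra. pose proof (ln_lt_sub1 u H H1). lra. Qed.

Lemma volterra_le_incr a b : 1 <= a -> a <= b -> volterra a <= volterra b.
Proof.
  intros Ha Hb. unfold volterra.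
  assert (ln b - ln a <= b / a - 1) by (rewrite <- ln_div by lra; apply ln_le_sub1, Rdiv_lt_0_compat; lra).
  assert (b / a - 1 <= b - a).
  { replace (b / a - 1) with ((b - a) / a) by (field; lra).
    apply Rmult_le_reg_r with a; [lra|]. replace ((b - a) / a * a) with (b - a) by (field; lra).
    nra. }
  lra.
Qed.

Lemma volterra_le_decr a b : 0 < b -> b <= a -> a <= 1 -> volterra a <= volterra b.
Proof.
  intros Hb Hba Ha. unfold volterra.
  assert (ln b - ln a <= b / a - 1) by (rewrite <- ln_div by lra; apply ln_le_sub1, Rdiv_lt_0_compat; lra).
  assert (b / a - 1 <= b - a).
  { replace (b / a - 1) with (- ((a - b) / a)) by (field; lra).
    assert (0 <= (a - b) / a) by (apply Rmult_le_pos; [|left; apply Rinv_0_lt_compat]; lra).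
    assert ((a - b) / a * a = a - b) by (field; lra). nra. }
  lra.
Qed.

Lemma exp_le_of_volterra_le u M : 0 < u -> volterra u <= M -> exp (- 1 - M) <= u.
Proof. intros Hu H. unfold volterra in H. rewrite <- (exp_ln u) by auto. apply exp_le_compat. lra.
Qed.

(* [volterra] decreases on [(0, 1]] and increases on [[1, +oo)], so small values of
   [volterra (w t)] pinch [w t] between [1 - e] and [1 + e]. *)
Lemma lim_infty_volterra (w : R -> R) t0 : (forall t, t0 <= t -> 0 < w t) ->
  lim_infty (fun t => volterra (w t)) 0 -> lim_infty w 1.
Proof.
  intros Hw Hl eps Heps. set (e := Rmin eps (1 / 2)).
  assert (He : 0 < e /\ e <= eps /\ e <= 1 / 2)
    by (unfold e; split; [apply Rmin_glb_lt; lra|split; [apply Rmin_l|apply Rmin_r]]).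
  destruct He as [He0 [Heps' Hhalf]]. clearbody e.
  set (m := Rmin (volterra (1 + e)) (volterra (1 - e))).
  assert (Hm : 0 < m) by (apply Rmin_glb_lt; apply volterra_gt0; lra).
  pose proof (Rmin_l (volterra (1 + e)) (volterra (1 - e))).
  pose proof (Rmin_r (volterra (1 + e)) (volterra (1 - e))). fold m in H, H0. clearbody m.
  destruct (Hl m Hm) as [T HT]. exists (Rmax T t0). intros t Ht.
  pose proof (Rmax_l T t0). pose proof (Rmax_r T t0).
  specialize (HT t ltac:(lra)). specialize (Hw t ltac:(lra)).
  rewrite Rminus_0_r, Rabs_right in HT by (apply Rle_ge, volterra_ge0; auto).
  apply Rabs_def1.
  - destruct (Rlt_or_le (w t - 1) e); [lra|].
    assert (volterra (1 + e) <= volterra (w t)) by (apply volterra_le_incr; lra). lra.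
  - destruct (Rlt_or_le (- e) (w t - 1)); [lra|].
    assert (volterra (1 - e) <= volterra (w t)) by (apply volterra_le_decr; lra). lra.
Qed.

Lemma derivable_pt_lim_volterra u : 0 < u -> derivable_pt_lim volterra u (1 - / u).
Proof.
  intros Hu. unfold volterra. replace (1 - / u) with (1 - 0 - / u) by ring.
  apply (derivable_pt_lim_minus (fun u => u - 1) ln); [|apply derivable_pt_lim_ln; auto].
  apply (derivable_pt_lim_minus id (fun _ => 1));
    [apply derivable_pt_lim_id|apply derivable_pt_lim_const].
Qed.

Lemma derivable_pt_lim_volterra_ratio (f : R -> R) t l c :
  derivable_pt_lim f t l -> 0 < f t -> 0 < c ->
  derivable_pt_lim (fun s => c * volterra (f s / c)) t ((1 - c / f t) * l).
Proof.
  intros H Hf Hc.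
  replace ((1 - c / f t) * l) with (c * ((1 - / (f t / c)) * (l * / c + f t * 0))) by (field; lra).
  apply derivable_pt_lim_scal.
  apply (derivable_pt_lim_comp (fun s => f s / c) volterra);
    [apply (derivable_pt_lim_mult f (fun _ => / c)); auto; apply derivable_pt_lim_const|].
  apply derivable_pt_lim_volterra, Rdiv_lt_0_compat; auto.
Qed.

Lemma lip_bounded_volterra t0 f m : 0 < m -> (forall t, t0 <= t -> m <= f t) ->
  lip_bounded t0 f -> lip_bounded t0 (fun t => volterra (f t)).
Proof.
  intros Hm Hf HL. unfold volterra.
  apply (lip_bounded_minus t0 (fun t => f t - 1) (fun t => ln (f t)));
    [apply (lip_bounded_minus t0 f (fun _ => 1)); auto using lip_bounded_const|].
  apply lip_bounded_ln with m; auto.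
Qed.

Lemma exp_le_of_volterra_weighted x xs c L : 0 < x -> 0 < xs -> 0 < c ->
  c * (xs * volterra (x / xs)) <= L -> xs * exp (- 1 - L / (c * xs)) <= x.
Proof.
  intros Hx Hxs Hc HL.
  assert (volterra (x / xs) <= L / (c * xs)).
  { apply Rmult_le_reg_l with (c * xs); [nra|].
    replace (c * xs * (L / (c * xs))) with L by (field; lra). nra. }
  apply exp_le_of_volterra_le in H; [|apply Rdiv_lt_0_compat; auto].
  apply Rmult_le_reg_r with (/ xs); [apply Rinv_0_lt_compat; auto|].
  replace (xs * exp (- 1 - L / (c * xs)) * / xs) with (exp (- 1 - L / (c * xs))) by (field; lra).
  exact H.
Qed.

(* One node class of the Lyapunov derivative, written in the ratios [x = S/S*], [y = V/V*],
   [z = I/I*], [r = Theta/Theta*].  The [S]-equation is stated with [I + Q = N - S - V],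
   which is where [gamma = eta] is used. *)
Lemma lyapunov_term_eq (S V I Th Ss Vs Is Ths la mu del gam bet d om N : R) :
  0 < S -> 0 < V -> 0 < I -> 0 < Th -> 0 < Ss -> 0 < Vs -> 0 < Is -> 0 < Ths -> 0 < d + gam ->
  d * N + gam * (N - Ss - Vs) + om * Vs - (mu + d) * Ss = la * Ss * Ths ->
  mu * Ss = del * la * Vs * Ths + (d + om) * Vs ->
  (gam + bet + d) * Is = la * Ths * (Ss + del * Vs) ->
  let x := S / Ss in let y := V / Vs in let z := I / Is in let r := Th / Ths in
  let P := la * Ss * Ths in let R := del * la * Vs * Ths in
  (1 - Ss / S) * (d * N + gam * (N - S - V) + om * V - (mu + d) * S - la * S * Th)
  + (1 - Vs / V) * (mu * S - del * la * V * Th - (d + om) * V)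
  + (1 - Is / I) * (la * Th * (S + del * V) - (gam + bet + d) * I)
  = P * (2 - 1 / x - x * r / z) + R * (3 - y * r / z - x / y - 1 / x) + (P + R) * (r - z)
    + (d + gam) * Vs * (3 - y - x / y - 1 / x) - (om - gam) * Vs * (x - y) * (x - y) / (x * y)
    - (d + gam) * (S - Ss) * (S - Ss) / S.
Proof.
  intros HS HV HI HTh HSs HVs HIs HThs Hdg E1 E2 E3.
  assert (HN : N = (la * Ss * Ths + gam * (Ss + Vs) - om * Vs + (mu + d) * Ss) / (d + gam))
    by (apply Rmult_eq_reg_r with (d + gam); [field_simplify|]; lra).
  assert (Hmu : mu = (del * la * Vs * Ths + (d + om) * Vs) / Ss)
    by (apply Rmult_eq_reg_r with Ss; [field_simplify|]; lra).
  assert (Hk : gam + bet + d = la * Ths * (Ss + del * Vs) / Is)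
    by (apply Rmult_eq_reg_r with Is; [field_simplify|]; lra).
  cbv zeta. rewrite Hk, HN, Hmu. field. repeat split; lra.
Qed.

(* Each bracket is bounded through [ln u <= u - 1]; [omega >= gamma] kills the
   [(x - y)^2] term. *)
Lemma lyapunov_term_le (S V I Th Ss Vs Is Ths la mu del gam bet d om N : R) :
  0 < S -> 0 < V -> 0 < I -> 0 < Th -> 0 < Ss -> 0 < Vs -> 0 < Is -> 0 < Ths -> 0 < la -> 0 <= del ->
  0 < gam -> 0 < d -> gam <= om ->
  d * N + gam * (N - Ss - Vs) + om * Vs - (mu + d) * Ss = la * Ss * Ths ->
  mu * Ss = del * la * Vs * Ths + (d + om) * Vs ->
  (gam + bet + d) * Is = la * Ths * (Ss + del * Vs) ->
  (1 - Ss / S) * (d * N + gam * (N - S - V) + om * V - (mu + d) * S - la * S * Th)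
  + (1 - Vs / V) * (mu * S - del * la * V * Th - (d + om) * V)
  + (1 - Is / I) * (la * Th * (S + del * V) - (gam + bet + d) * I)
  <= - ((d + gam) * (S - Ss) * (S - Ss) / S + (d + gam) * Vs * volterra (V / Vs)
        + la * Ss * Ths * volterra ((S / Ss) * (Th / Ths) / (I / Is)))
     + (gam + bet + d) * Is * (Th / Ths - I / Is - ln (Th / Ths) + ln (I / Is)).
Proof.
  intros HS HV HI HTh HSs HVs HIs HThs Hla Hdel Hgam Hd Hom E1 E2 E3.
  rewrite (lyapunov_term_eq S V I Th Ss Vs Is Ths la mu del gam bet d om N) by (auto; lra).
  set (x := S / Ss). set (y := V / Vs). set (z := I / Is). set (r := Th / Ths).
  assert (Hx : 0 < x) by (apply Rdiv_lt_0_compat; auto).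
  assert (Hy : 0 < y) by (apply Rdiv_lt_0_compat; auto).
  assert (Hz : 0 < z) by (apply Rdiv_lt_0_compat; auto).
  assert (Hr : 0 < r) by (apply Rdiv_lt_0_compat; auto).
  assert (HP : 0 < la * Ss * Ths) by (apply Rmult_lt_0_compat; [apply Rmult_lt_0_compat|]; auto).
  assert (HR : 0 <= del * la * Vs * Ths)
    by (apply Rmult_le_pos; [apply Rmult_le_pos; [apply Rmult_le_pos|]|]; lra).
  pose proof (ln_le_sub1 (1 / x) ltac:(apply Rdiv_lt_0_compat; lra)) as L1.
  pose proof (ln_le_sub1 (x / y) ltac:(apply Rdiv_lt_0_compat; lra)) as L2.
  pose proof (ln_le_sub1 (y * r / z) ltac:(apply Rdiv_lt_0_compat; [apply Rmult_lt_0_compat|]; auto)) as L3.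
  rewrite ln_div, ln_1 in L1 by (auto; lra). rewrite ln_div in L2 by auto.
  rewrite ln_div, ln_mult in L3 by (auto; apply Rmult_lt_0_compat; auto).
  assert (Hlw : ln (x * r / z) = ln x + ln r - ln z)
    by (rewrite ln_div, ln_mult; auto; apply Rmult_lt_0_compat; auto).
  assert (I1 : 2 - 1 / x - x * r / z <= - volterra (x * r / z) - ln r + ln z)
    by (unfold volterra; rewrite Hlw; lra).
  assert (I2 : 3 - y * r / z - x / y - 1 / x <= - ln r + ln z) by lra.
  assert (I3 : 3 - y - x / y - 1 / x <= - volterra y) by (unfold volterra; lra).
  assert (I4 : 0 <= (om - gam) * Vs * (x - y) * (x - y) / (x * y)).
  { apply Rmult_le_pos; [|left; apply Rinv_0_lt_compat, Rmult_lt_0_compat; auto].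
    rewrite Rmult_assoc. apply Rmult_le_pos; [apply Rmult_le_pos; lra|apply Rle_0_sqr]. }
  assert (J1 : la * Ss * Ths * (2 - 1 / x - x * r / z)
               <= la * Ss * Ths * (- volterra (x * r / z) - ln r + ln z))
    by (apply Rmult_le_compat_l; lra).
  assert (J2 : del * la * Vs * Ths * (3 - y * r / z - x / y - 1 / x)
               <= del * la * Vs * Ths * (- ln r + ln z))
    by (apply Rmult_le_compat_l; lra).
  assert (J3 : (d + gam) * Vs * (3 - y - x / y - 1 / x) <= (d + gam) * Vs * (- volterra y))
    by (apply Rmult_le_compat_l; [apply Rmult_le_pos|]; lra).
  replace ((gam + bet + d) * Is) with (la * Ss * Ths + del * la * Vs * Ths) by lra.
  lra.
Qed.

(* Weighted form of [ln u <= u - 1] at [u = (I_k / I*_k) / (A / B)]: the terms vanish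
   on summation because [sum w I = A] and [sum w I* = B]. *)
Lemma sumk_ratio_ln_le0 n (w Is I : nat -> R) A B :
  (forall k, (1 <= k <= n)%nat -> 0 <= w k /\ 0 < Is k /\ 0 < I k) -> 0 < A -> 0 < B ->
  sumk n (fun k => w k * I k) = A -> sumk n (fun k => w k * Is k) = B ->
  sumk n (fun k => w k * Is k * (A / B - I k / Is k - ln (A / B) + ln (I k / Is k))) <= 0.
Proof.
  intros Hw HA HB EA EB. remember (A / B) as r eqn:Er.
  assert (Hr : 0 < r) by (rewrite Er; apply Rdiv_lt_0_compat; auto).
  apply Rle_trans with (sumk n (fun k => (1 - / r) * (r * (w k * Is k) - w k * I k))).
  - apply sumk_le. intros k Hk. destruct (Hw k Hk) as [H1 [H2 H3]].
    assert (Hz : 0 < I k / Is k) by (apply Rdiv_lt_0_compat; auto).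
    assert (ln (I k / Is k) - ln r <= I k / Is k / r - 1)
      by (rewrite <- ln_div by auto; apply ln_le_sub1, Rdiv_lt_0_compat; auto).
    replace ((1 - / r) * (r * (w k * Is k) - w k * I k))
      with (w k * Is k * ((r - I k / Is k) - (r - I k / Is k) / r)) by (field; lra).
    apply Rmult_le_compat_l; [nra|].
    replace ((r - I k / Is k) / r) with (1 - I k / Is k / r) by (field; lra). lra.
  - rewrite sumk_scal, sumk_minus, sumk_scal, EA, EB. right. rewrite Er. field. lra.
Qed.

(** * Endemic equilibria of the SVIQS model *)

Section SVIQS.
Variables (n : nat) (p : nat -> R) (b d Phi : R) (lam phi mu : nat -> R)
  (beta gamma eta omega delta : R).
Hypotheses (Hn : (1 <= n)%nat) (Hp : forall k, (1 <= k <= n)%nat -> p k > 0)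
  (Hbd : b > d) (Hd : d > 0) (HPhi : Phi > 0)
  (Hlam : forall k, (1 <= k <= n)%nat -> lam k > 0)
  (Hphi : forall k, (1 <= k <= n)%nat -> phi k > 0)
  (Hmu : forall k, (1 <= k <= n)%nat -> mu k > 0)
  (Hbeta : beta > 0) (Hgamma : gamma > 0) (Homega : omega > 0)
  (Hdelta : 0 <= delta <= 1) (Hge : omega >= gamma) (Heq : gamma = eta).

Definition Nk k := Nstar b d Phi k.
Definition kappa := gamma + beta + d.
(* [S + V + I + Q = S + V + cI * I] at an equilibrium, since [Q = beta I / (eta + d)]. *)
Definition cI := (eta + beta + d) / (eta + d).

(* For a prescribed force of infection [th], the equilibrium equations of class [k]
   are linear; [Seq], [Veq], [Ieq], [Qeq] is their solution. *)
Definition aV k th := delta * lam k * th + d + omega.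
Definition denom k th := kappa * (aV k th + mu k) + cI * lam k * th * (aV k th + delta * mu k).
Definition Seq k th := Nk k * aV k th * kappa / denom k th.
Definition Veq k th := Nk k * mu k * kappa / denom k th.
Definition Ieq k th := lam k * th * Nk k * (aV k th + delta * mu k) / denom k th.
Definition Qeq k th := beta * Ieq k th / (eta + d).
(* [Theta (Ieq . th) = th * G th], so endemic equilibria correspond to roots of [G th = 1]. *)
Definition Gk k th := phi k * p k * (lam k * Nk k * (aV k th + delta * mu k) / denom k th).
Definition G th := / kavg n p * sumk n (fun k => Gk k th).

Lemma class_pos k : (1 <= k <= n)%nat -> 0 < p k /\ 0 < lam k /\ 0 < phi k /\ 0 < mu k.
Proof. intros Hk. repeat split; [apply Hp|apply Hlam|apply Hphi|apply Hmu]; auto. Qed.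

Lemma kavg_pos : 0 < kavg n p.
Proof.
  apply sumk_pos; auto. intros k Hk.
  apply Rmult_lt_0_compat; [apply lt_0_INR; lia|apply Hp; auto].
Qed.

Lemma Nk_bounds k : (1 <= k)%nat -> 0 < Nk k < 1.
Proof.
  intros Hk. unfold Nk, Nstar.
  assert (0 < b * INR k * Phi) by (apply Rmult_lt_0_compat; [apply Rmult_lt_0_compat|];
    try apply lt_0_INR; lia || lra).
  split; [apply Rdiv_lt_0_compat; lra|].
  apply Rmult_lt_reg_r with (d + b * INR k * Phi); [lra|].
  unfold Rdiv. rewrite Rmult_assoc, Rinv_l by lra. lra.
Qed.

Lemma Lam_Nk k : (1 <= k)%nat -> Lam b d Phi k = d * Nk k.
Proof.
  intros Hk. unfold Lam, Nk, Nstar.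
  assert (0 < b * INR k * Phi) by (apply Rmult_lt_0_compat; [apply Rmult_lt_0_compat|];
    try apply lt_0_INR; lia || lra).
  field. lra.
Qed.

Lemma cI_eq : cI = kappa / (gamma + d).
Proof. unfold cI, kappa. now rewrite Heq. Qed.

Lemma cI_pos : 0 < cI.
Proof. rewrite cI_eq. unfold kappa. apply Rdiv_lt_0_compat; lra. Qed.

Lemma aV_ge k th : (1 <= k <= n)%nat -> 0 <= th -> d + omega <= aV k th.
Proof.
  intros Hk Hth. unfold aV. destruct (class_pos k Hk) as [_ [Hl _]].
  assert (0 <= delta * lam k * th) by (apply Rmult_le_pos; [apply Rmult_le_pos|]; lra). lra.
Qed.

Lemma denom_pos k th : (1 <= k <= n)%nat -> 0 <= th -> 0 < denom k th.
Proof.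
  intros Hk Hth. unfold denom. pose proof (aV_ge k th Hk Hth). pose proof cI_pos.
  destruct (class_pos k Hk) as [_ [Hl [_ Hm]]].
  assert (0 < kappa * (aV k th + mu k)) by (unfold kappa; apply Rmult_lt_0_compat; lra).
  assert (0 <= cI * lam k * th * (aV k th + delta * mu k)).
  { apply Rmult_le_pos; [apply Rmult_le_pos; [apply Rmult_le_pos|]|]; try lra.
    assert (0 <= delta * mu k) by (apply Rmult_le_pos; lra). lra. }
  lra.
Qed.

Lemma Gk_decr k th1 th2 : (1 <= k <= n)%nat -> 0 <= th1 -> th1 < th2 -> Gk k th2 < Gk k th1.
Proof.
  intros Hk H1 H2. unfold Gk.
  pose proof (denom_pos k th1 Hk H1) as D1. pose proof (denom_pos k th2 Hk ltac:(lra)) as D2.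
  pose proof (aV_ge k th1 Hk H1). pose proof (aV_ge k th2 Hk ltac:(lra)).
  pose proof (Nk_bounds k ltac:(lia)). destruct (class_pos k Hk) as [Hpk [Hl [Hph Hm]]].
  assert (0 <= delta * mu k) by (apply Rmult_le_pos; lra).
  set (A1 := aV k th1 + delta * mu k). set (A2 := aV k th2 + delta * mu k).
  assert (Hcross : A1 * denom k th2 - A2 * denom k th1
                   = (th2 - th1) * lam k * (kappa / (gamma + d))
                     * (A1 * A2 - mu k * (1 - delta) * delta * (gamma + d))).
  { unfold A1, A2, denom, aV. rewrite cI_eq. field. lra. }
  (* [A1, A2 >= d + gamma] makes the bracket positive. *)
  assert (Hbracket : mu k * (1 - delta) * delta * (gamma + d) < A1 * A2).
  { assert ((d + gamma + delta * mu k) * (d + gamma + delta * mu k) <= A1 * A2)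
      by (apply Rmult_le_compat; unfold A1, A2; lra).
    assert (mu k * (1 - delta) * delta * (gamma + d) <= delta * mu k * (gamma + d)) by nra.
    nra. }
  assert (0 < A1 * denom k th2 - A2 * denom k th1).
  { rewrite Hcross. apply Rmult_lt_0_compat; [|lra].
    apply Rmult_lt_0_compat; [apply Rmult_lt_0_compat; lra|apply Rdiv_lt_0_compat; unfold kappa; lra].
    }
  apply Rmult_lt_compat_l; [apply Rmult_lt_0_compat; lra|].
  apply Rmult_lt_reg_r with (denom k th1 * denom k th2); [apply Rmult_lt_0_compat; auto|].
  replace (lam k * Nk k * A2 / denom k th2 * (denom k th1 * denom k th2))
    with (lam k * Nk k * (A2 * denom k th1)) by (field; lra).
  replace (lam k * Nk k * A1 / denom k th1 * (denom k th1 * denom k th2))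
    with (lam k * Nk k * (A1 * denom k th2)) by (field; lra).
  apply Rmult_lt_compat_l; [nra|lra].
Qed.

Lemma G_decr th1 th2 : 0 <= th1 -> th1 < th2 -> G th2 < G th1.
Proof.
  intros H1 H2. unfold G. apply Rmult_lt_compat_l; [apply Rinv_0_lt_compat, kavg_pos|].
  apply sumk_lt; auto. intros k Hk. apply Gk_decr; auto.
Qed.

Lemma G_0 : G 0 = Rnought n p b d Phi lam phi mu beta gamma omega delta.
Proof.
  unfold G, Rnought. f_equal. apply sumk_ext. intros k Hk.
  unfold Gk, denom, aV, kappa. rewrite Lam_Nk by lia. destruct (class_pos k Hk) as [_ [_ [_ Hm]]].
  assert (0 <= delta * mu k) by (apply Rmult_le_pos; lra).
  field. repeat split; lra.
Qed.

Lemma Gk_le k th : (1 <= k <= n)%nat -> 0 < th -> Gk k th <= phi k * p k * Nk k / (cI * th).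
Proof.
  intros Hk Hth. unfold Gk. pose proof (denom_pos k th Hk ltac:(lra)). pose proof cI_pos.
  pose proof (Nk_bounds k ltac:(lia)). destruct (class_pos k Hk) as [Hpk [Hl [Hph Hm]]].
  pose proof (aV_ge k th Hk ltac:(lra)). assert (0 <= delta * mu k) by (apply Rmult_le_pos; lra).
  set (A := aV k th + delta * mu k).
  assert (cI * lam k * th * A <= denom k th).
  { unfold denom. fold A.
    assert (0 < kappa * (aV k th + mu k)) by (unfold kappa; apply Rmult_lt_0_compat; lra). lra. }
  assert (lam k * Nk k * A / denom k th <= Nk k / (cI * th)).
  { apply Rmult_le_reg_r with (denom k th * (cI * th)); [apply Rmult_lt_0_compat; nra|].
    replace (lam k * Nk k * A / denom k th * (denom k th * (cI * th)))
      with (Nk k * (cI * lam k * th * A)) by (field; lra).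
    replace (Nk k / (cI * th) * (denom k th * (cI * th))) with (Nk k * denom k th) by (field; lra).
    apply Rmult_le_compat_l; lra. }
  replace (phi k * p k * Nk k / (cI * th)) with (phi k * p k * (Nk k / (cI * th))) by (field; lra).
  apply Rmult_le_compat_l; [nra|auto].
Qed.

Lemma G_lt_1_large : exists X, 0 < X /\ G X < 1.
Proof.
  set (C := / kavg n p * sumk n (fun k => phi k * p k * Nk k / cI)).
  assert (HC : 0 < C).
  { apply Rmult_lt_0_compat; [apply Rinv_0_lt_compat, kavg_pos|]. apply sumk_pos; auto.
    intros k Hk. pose proof (Nk_bounds k ltac:(lia)). pose proof cI_pos.
    destruct (class_pos k Hk) as [Hpk [_ [Hph _]]].
    apply Rdiv_lt_0_compat; [apply Rmult_lt_0_compat; [apply Rmult_lt_0_compat|]|]; lra. }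
  remember (2 * C + 1) as X eqn:EX. exists X. split; [lra|].
  assert (Hsum : sumk n (fun k => Gk k X) <= / X * sumk n (fun k => phi k * p k * Nk k / cI)).
  { rewrite <- sumk_scal. apply sumk_le. intros k Hk.
    eapply Rle_trans; [apply Gk_le; auto; lra|]. right. pose proof cI_pos. field. lra. }
  assert (G X <= C / X).
  { unfold G, C. unfold Rdiv. rewrite Rmult_assoc, (Rmult_comm _ (/ X)).
    apply Rmult_le_compat_l; [left; apply Rinv_0_lt_compat, kavg_pos|auto]. }
  assert (C / X < 1) by (apply Rmult_lt_reg_r with X; [lra|];
    unfold Rdiv; rewrite Rmult_assoc, Rinv_l by lra; lra).
  lra.
Qed.

Lemma continuity_pt_G th : 0 <= th -> continuity_pt G th.
Proof.
  intros Hth. unfold G. apply continuity_pt_scal, continuity_pt_sumk. intros k Hk.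
  pose proof (denom_pos k th Hk Hth). unfold Gk, denom, aV in *. reg. lra.
Qed.

Lemma G_root : Rnought n p b d Phi lam phi mu beta gamma omega delta > 1 ->
  exists ths, 0 < ths /\ G ths = 1.
Proof.
  intros HR. destruct G_lt_1_large as [X [HX HGX]].
  destruct (Ranalysis5.IVT_interv (fun th => 1 - G th) 0 X) as [z [[Hz0 HzX] Hz]].
  - intros a Ha. apply continuity_pt_minus; [apply continuity_pt_const; now intros|].
    apply continuity_pt_G. lra.
  - lra.
  - rewrite G_0. lra.
  - lra.
  - exists z. split; [|lra]. destruct (Rle_lt_or_eq_dec 0 z Hz0) as [|<-]; auto.
    rewrite G_0 in Hz. lra.
Qed.

Lemma Theta_Ieq th : 0 < th -> Theta n p phi (fun k => Ieq k th) = th * G th.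
Proof.
  intros Hth. unfold Theta, G.
  replace (th * (/ kavg n p * sumk n (fun k => Gk k th)))
    with (/ kavg n p * (th * sumk n (fun k => Gk k th))) by ring.
  f_equal. rewrite <- sumk_scal. apply sumk_ext. intros k Hk. unfold Gk, Ieq.
  pose proof (denom_pos k th Hk ltac:(lra)). field. lra.
Qed.

Lemma eq_class_pos k th : (1 <= k <= n)%nat -> 0 < th ->
  0 < Seq k th /\ 0 < Veq k th /\ 0 < Ieq k th /\ 0 < Qeq k th.
Proof.
  intros Hk Hth. pose proof (denom_pos k th Hk ltac:(lra)). pose proof (aV_ge k th Hk ltac:(lra)).
  pose proof (Nk_bounds k ltac:(lia)). destruct (class_pos k Hk) as [_ [Hl [_ Hm]]].
  assert (0 <= delta * mu k) by (apply Rmult_le_pos; lra).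
  assert (0 < kappa) by (unfold kappa; lra).
  assert (0 < Ieq k th).
  { apply Rdiv_lt_0_compat; auto.
    apply Rmult_lt_0_compat; [apply Rmult_lt_0_compat; [apply Rmult_lt_0_compat|]|]; lra. }
  unfold Seq, Veq, Qeq. repeat split; auto.
  - apply Rdiv_lt_0_compat; auto. apply Rmult_lt_0_compat; [apply Rmult_lt_0_compat|]; lra.
  - apply Rdiv_lt_0_compat; auto. apply Rmult_lt_0_compat; [apply Rmult_lt_0_compat|]; lra.
  - apply Rdiv_lt_0_compat; [apply Rmult_lt_0_compat|]; lra.
Qed.

Lemma eq_class_sum k th : (1 <= k <= n)%nat -> 0 < th ->
  Seq k th + Veq k th + Ieq k th + Qeq k th = Nk k.
Proof.
  intros Hk Hth. pose proof (denom_pos k th Hk ltac:(lra)).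
  assert ((eta + d) * denom k th = kappa * (aV k th + mu k) * (eta + d)
            + (eta + beta + d) * lam k * th * (aV k th + delta * mu k))
    by (unfold denom, cI; field; lra).
  assert (0 < (eta + d) * denom k th) by (apply Rmult_lt_0_compat; lra).
  unfold Qeq, Seq, Veq, Ieq. unfold denom, cI in *. field. split; lra.
Qed.

Lemma eq_class_solves k th : (1 <= k <= n)%nat -> 0 < th ->
  fS (Lam b d Phi k) (lam k) (mu k) gamma eta omega d th (Seq k th) (Veq k th) (Ieq k th) (Qeq k th) = 0 /\
  fV (lam k) (mu k) delta omega d th (Seq k th) (Veq k th) = 0 /\
  fI (lam k) delta gamma beta d th (Seq k th) (Veq k th) (Ieq k th) = 0 /\
  fQ beta eta d (Ieq k th) (Qeq k th) = 0.
Proof.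
  intros Hk Hth. pose proof (denom_pos k th Hk ltac:(lra)). pose proof (eq_class_sum k th Hk Hth).
  assert (HV : fV (lam k) (mu k) delta omega d th (Seq k th) (Veq k th) = 0)
    by (unfold fV, Seq, Veq, aV; field; lra).
  assert (HI : fI (lam k) delta gamma beta d th (Seq k th) (Veq k th) (Ieq k th) = 0)
    by (unfold fI, Seq, Veq, Ieq, aV, kappa; field; lra).
  assert (HQ : fQ beta eta d (Ieq k th) (Qeq k th) = 0) by (unfold fQ, Qeq; field; lra).
  repeat split; auto.
  (* The four right-hand sides add up to [Lam - d (S + V + I + Q)]. *)
  rewrite Lam_Nk by lia. unfold fS, fV, fI, fQ in *. nra.
Qed.

Lemma eq_class_unique k th S V I Q : (1 <= k <= n)%nat -> 0 < th ->
  fS (Lam b d Phi k) (lam k) (mu k) gamma eta omega d th S V I Q = 0 ->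
  fV (lam k) (mu k) delta omega d th S V = 0 ->
  fI (lam k) delta gamma beta d th S V I = 0 ->
  fQ beta eta d I Q = 0 ->
  S = Seq k th /\ V = Veq k th /\ I = Ieq k th /\ Q = Qeq k th.
Proof.
  intros Hk Hth E1 E2 E3 E4. pose proof (denom_pos k th Hk ltac:(lra)).
  pose proof (aV_ge k th Hk ltac:(lra)).
  rewrite Lam_Nk in E1 by lia. unfold fS, fV, fI, fQ in *.
  assert (HQ : Q = beta * I / (eta + d)) by (apply Rmult_eq_reg_r with (eta + d); [field_simplify|]; lra).
  assert (HV : V = mu k * S / aV k th)
    by (apply Rmult_eq_reg_r with (aV k th); [unfold aV in *; field_simplify|]; lra).
  assert (HI : I = lam k * th * (S + delta * V) / kappa)
    by (apply Rmult_eq_reg_r with kappa; [unfold kappa; field_simplify|unfold kappa]; lra).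
  assert (HN : S + V + I + Q = Nk k) by (apply Rmult_eq_reg_l with d; lra).
  assert (HS : S = Seq k th).
  { unfold Seq. apply Rmult_eq_reg_r with (denom k th); [|lra].
    replace (Nk k * aV k th * kappa / denom k th * denom k th) with (Nk k * aV k th * kappa) by (field; lra).
    rewrite <- HN, HQ, HI, HV. unfold denom, cI. field. unfold kappa; repeat split; lra. }
  assert (HV' : V = Veq k th) by (rewrite HV, HS; unfold Seq, Veq; field; lra).
  assert (HI' : I = Ieq k th)
    by (rewrite HI, HV', HS; unfold Seq, Veq, Ieq, aV, kappa; field; unfold kappa in *; lra).
  repeat split; auto. now rewrite HQ, HI'.
Qed.

Lemma endemic_eq_Seq ths : 0 < ths -> G ths = 1 ->
  endemic_eq n p b d Phi lam phi mu beta gamma eta omega delta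
    (fun k => Seq k ths) (fun k => Veq k ths) (fun k => Ieq k ths) (fun k => Qeq k ths).
Proof.
  intros Hth HG.
  assert (HT : Theta n p phi (fun k => Ieq k ths) = ths) by (rewrite Theta_Ieq, HG; lra).
  split; [|split].
  - intros k Hk. destruct (eq_class_pos k ths Hk Hth) as [? [? [? ?]]]. lra.
  - rewrite HT; lra.
  - intros k Hk. simpl. rewrite HT. apply eq_class_solves; auto.
Qed.

Lemma endemic_eq_unique ths : 0 < ths -> G ths = 1 ->
  forall Ss Vs Is Qs, endemic_eq n p b d Phi lam phi mu beta gamma eta omega delta Ss Vs Is Qs ->
  forall k, (1 <= k <= n)%nat ->
    Ss k = Seq k ths /\ Vs k = Veq k ths /\ Is k = Ieq k ths /\ Qs k = Qeq k ths.
Proof.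
  intros Hth HG Ss Vs Is Qs [_ [Hpos Heqs]].
  set (th := Theta n p phi Is) in *.
  assert (Hu : forall k, (1 <= k <= n)%nat ->
            Ss k = Seq k th /\ Vs k = Veq k th /\ Is k = Ieq k th /\ Qs k = Qeq k th).
  { intros k Hk. destruct (Heqs k Hk) as [E1 [E2 [E3 E4]]]. apply eq_class_unique; auto; lra. }
  assert (HGth : G th = 1).
  { apply Rmult_eq_reg_l with th; [|lra]. rewrite <- Theta_Ieq by lra. rewrite Rmult_1_r.
    unfold th at 2, Theta. f_equal. apply sumk_ext. intros k Hk.
    now rewrite (proj1 (proj2 (proj2 (Hu k Hk)))). }
  assert (th = ths).
  { destruct (Rtotal_order th ths) as [Hl|[He|Hg]]; auto.
    - pose proof (G_decr th ths ltac:(lra) Hl). lra.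
    - pose proof (G_decr ths th ltac:(lra) Hg). lra. }
  intros k Hk. rewrite <- H. apply Hu; auto.
Qed.

(** * Global attractivity *)

Definition ThetaMax := / kavg n p * sumk n (fun j => phi j * p j).

Lemma ThetaMax_ge0 : 0 <= ThetaMax.
Proof.
  apply Rmult_le_pos; [left; apply Rinv_0_lt_compat, kavg_pos|].
  apply sumk_nonneg. intros j Hj. destruct (class_pos j Hj) as [? [_ [? _]]]. nra.
Qed.

Section Solution.
Variables (S V I Q : nat -> R -> R).
Hypothesis Hsol : is_solution n p b d Phi lam phi mu beta gamma eta omega delta S V I Q.
Hypothesis Hinit : forall k, (1 <= k <= n)%nat ->
  0 <= S k 0 /\ 0 <= V k 0 /\ 0 <= I k 0 /\ 0 <= Q k 0 /\
  S k 0 + V k 0 + I k 0 + Q k 0 = Nstar b d Phi k.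
Hypothesis HI0 : sumk n (fun k => p k * I k 0) > 0.

Definition Th t := Theta n p phi (fun i => I i t).
Definition dS k t :=
  fS (Lam b d Phi k) (lam k) (mu k) gamma eta omega d (Th t) (S k t) (V k t) (I k t) (Q k t).
Definition dV k t := fV (lam k) (mu k) delta omega d (Th t) (S k t) (V k t).
Definition dI k t := fI (lam k) delta gamma beta d (Th t) (S k t) (V k t) (I k t).
Definition dQ k t := fQ beta eta d (I k t) (Q k t).

Lemma sol_derive k t : (1 <= k <= n)%nat -> 0 < t ->
  derivable_pt_lim (S k) t (dS k t) /\ derivable_pt_lim (V k) t (dV k t) /\
  derivable_pt_lim (I k) t (dI k t) /\ derivable_pt_lim (Q k) t (dQ k t).
Proof. intros Hk Ht. exact (proj1 (Hsol k Hk) t Ht). Qed.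

Lemma sol_right_cont0 k : (1 <= k <= n)%nat ->
  right_cont0 (S k) /\ right_cont0 (V k) /\ right_cont0 (I k) /\ right_cont0 (Q k).
Proof. intros Hk. exact (proj2 (Hsol k Hk)). Qed.

Lemma conservation k t : (1 <= k <= n)%nat -> 0 <= t -> S k t + V k t + I k t + Q k t = Nk k.
Proof.
  intros Hk Ht. destruct (Hinit k Hk) as [_ [_ [_ [_ H0]]]].
  destruct (Rle_lt_or_eq_dec 0 t Ht) as [Htp| <-]; [|exact H0].
  destruct (sol_right_cont0 k Hk) as [RS [RV [RI RQ]]].
  assert (S k t + V k t + I k t + Q k t + - Nk k = 0); [|lra].
  apply (linear_ode_zero (fun s => S k s + V k s + I k s + Q k s + - Nk k)
    (fun s => dS k s + dV k s + dI k s + dQ k s + 0) d); auto; try lra.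
  - intros s Hs. destruct (sol_derive k s Hk Hs) as [DS [DV [DI DQ]]].
    repeat apply derivable_pt_lim_plus; auto. apply derivable_pt_lim_const.
  - intros s Hs. unfold dS, dV, dI, dQ, fS, fV, fI, fQ. rewrite Lam_Nk by lia. ring.
  - repeat apply right_cont0_plus; auto. apply right_cont0_const.
  - unfold Nk. lra.
Qed.

Lemma sol_bounded_0T T : exists B, forall k, (1 <= k <= n)%nat -> forall s, 0 <= s <= T ->
  Rabs (S k s) <= B /\ Rabs (V k s) <= B /\ Rabs (I k s) <= B /\ Rabs (Q k s) <= B.
Proof.
  apply (uniform_bound_family n (fun k B => forall s, 0 <= s <= T ->
    Rabs (S k s) <= B /\ Rabs (V k s) <= B /\ Rabs (I k s) <= B /\ Rabs (Q k s) <= B)).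
  - intros k B B' HB H s Hs. specialize (H s Hs). lra.
  - intros k Hk. destruct (sol_right_cont0 k Hk) as [R1 [R2 [R3 R4]]].
    pose proof (fun t ht => sol_derive k t Hk ht) as Hder.
    destruct (bounded_on_0T (S k) (dS k) R1 (fun t ht => proj1 (Hder t ht)) T) as [B1 H1].
    destruct (bounded_on_0T (V k) (dV k) R2 (fun t ht => proj1 (proj2 (Hder t ht))) T) as [B2 H2].
    destruct (bounded_on_0T (I k) (dI k) R3 (fun t ht => proj1 (proj2 (proj2 (Hder t ht)))) T) as [B3 H3].
    destruct (bounded_on_0T (Q k) (dQ k) R4 (fun t ht => proj2 (proj2 (proj2 (Hder t ht)))) T) as [B4 H4].
    exists (Rmax (Rmax B1 B2) (Rmax B3 B4)). intros s Hs.
    specialize (H1 s Hs); specialize (H2 s Hs); specialize (H3 s Hs); specialize (H4 s Hs).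
    pose proof (Rmax_l (Rmax B1 B2) (Rmax B3 B4)). pose proof (Rmax_r (Rmax B1 B2) (Rmax B3 B4)).
    pose proof (Rmax_l B1 B2). pose proof (Rmax_r B1 B2). pose proof (Rmax_l B3 B4).
    pose proof (Rmax_r B3 B4).
    repeat split; lra.
Qed.

(* Nonnegativity goes through the total squared negative part [negW], which satisfies
   a linear differential inequality on bounded time intervals. *)
Definition negW s := sumk n (fun k => negsq (S k s) + negsq (V k s) + negsq (I k s) + negsq (Q k s)).
Definition negW' s := sumk n (fun k => 2 * (Rmin (S k s) 0 * dS k s + Rmin (V k s) 0 * dV k s
                                       + Rmin (I k s) 0 * dI k s + Rmin (Q k s) 0 * dQ k s)).

Lemma negW_derive s : 0 < s -> derivable_pt_lim negW s (negW' s).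
Proof.
  intros Hs. unfold negW, negW'.
  replace (sumk n _) with (sumk n (fun k => 2 * Rmin (S k s) 0 * dS k s + 2 * Rmin (V k s) 0 * dV k s
                                     + 2 * Rmin (I k s) 0 * dI k s + 2 * Rmin (Q k s) 0 * dQ k s))
    by (apply sumk_ext; intros; ring).
  apply (derivable_pt_lim_sumk n). intros k Hk. destruct (sol_derive k s Hk Hs) as [DS [DV [DI DQ]]].
  repeat apply derivable_pt_lim_plus; apply (derivable_pt_lim_comp _ negsq); auto using derivable_pt_lim_negsq.
Qed.

Lemma negW_class_ge0 s k : 0 <= negsq (S k s) + negsq (V k s) + negsq (I k s) + negsq (Q k s).
Proof.
  pose proof (negsq_ge0 (S k s)). pose proof (negsq_ge0 (V k s)).
  pose proof (negsq_ge0 (I k s)). pose proof (negsq_ge0 (Q k s)). lra.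
Qed.

Lemma negW_ge_class s k : (1 <= k <= n)%nat ->
  negsq (S k s) + negsq (V k s) + negsq (I k s) + negsq (Q k s) <= negW s.
Proof.
  intros Hk.
  apply (sumk_ge_term n (fun k => negsq (S k s) + negsq (V k s) + negsq (I k s) + negsq (Q k s)));
    auto using negW_class_ge0.
Qed.

Lemma negW_ge0 s : 0 <= negW s.
Proof. apply sumk_nonneg. intros. apply negW_class_ge0. Qed.

Lemma negW_small0 : small0 negW.
Proof.
  apply small0_le with (fun s => sumk n (fun k =>
    (S k s - S k 0) * (S k s - S k 0) + (V k s - V k 0) * (V k s - V k 0)
    + (I k s - I k 0) * (I k s - I k 0) + (Q k s - Q k 0) * (Q k s - Q k 0))).
  - intros s Hs. apply sumk_le. intros k Hk. destruct (Hinit k Hk) as [A [B [C [D _]]]].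
    pose proof (negsq_le_sqr (S k s) (S k 0) A). pose proof (negsq_le_sqr (V k s) (V k 0) B).
    pose proof (negsq_le_sqr (I k s) (I k 0) C). pose proof (negsq_le_sqr (Q k s) (Q k 0) D). lra.
  - apply (small0_sumk n). intros k Hk. destruct (sol_right_cont0 k Hk) as [R1 [R2 [R3 R4]]].
    repeat apply small0_plus; apply small0_sqr_diff; auto.
Qed.

Lemma Rabs_Th_le s B : (forall k, (1 <= k <= n)%nat -> Rabs (I k s) <= B) ->
  Rabs (Th s) <= / kavg n p * sumk n (fun j => phi j * p j * B).
Proof.
  intros HB. unfold Th, Theta. pose proof kavg_pos.
  rewrite Rabs_mult, Rabs_right by (apply Rle_ge; left; apply Rinv_0_lt_compat; lra).
  apply Rmult_le_compat_l; [left; apply Rinv_0_lt_compat; lra|].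
  eapply Rle_trans; [apply sumk_abs|]. apply sumk_le. intros k Hk. rewrite Rabs_mult.
  destruct (class_pos k Hk) as [? [_ [? _]]]. rewrite Rabs_right by (apply Rle_ge; nra).
  apply Rmult_le_compat_l; [nra|auto].
Qed.

Lemma negsq_Th_le s : negsq (Th s) <= ThetaMax * ThetaMax * negW s.
Proof.
  pose proof ThetaMax_ge0. pose proof (negW_ge0 s). pose proof kavg_pos.
  set (r := sqrt (negW s)).
  assert (Hr : 0 <= r) by apply sqrt_pos. assert (Hrr : r * r = negW s) by (apply sqrt_sqrt; auto).
  assert (Hm : forall j, (1 <= j <= n)%nat -> - r <= Rmin (I j s) 0).
  { intros j Hj. pose proof (negW_ge_class s j Hj).
    pose proof (negsq_ge0 (S j s)); pose proof (negsq_ge0 (V j s)); pose proof (negsq_ge0 (Q j s)).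
    pose proof (Rmin_r (I j s) 0). unfold negsq in *.
    assert (sqrt ((- Rmin (I j s) 0) * (- Rmin (I j s) 0)) <= r) by (apply sqrt_le_1_alt; lra).
    rewrite sqrt_square in H7 by lra. lra. }
  assert (HT : - (ThetaMax * r) <= Th s).
  { assert (E : sumk n (fun k => phi k * p k * - r) = - r * sumk n (fun k => phi k * p k))
      by (rewrite <- sumk_scal; apply sumk_ext; intros; ring).
    replace (- (ThetaMax * r)) with (/ kavg n p * sumk n (fun k => phi k * p k * - r))
      by (rewrite E; unfold ThetaMax; ring).
    unfold Th, Theta. apply Rmult_le_compat_l; [left; apply Rinv_0_lt_compat; lra|].
    apply sumk_le. intros k Hk. specialize (Hm k Hk). destruct (class_pos k Hk) as [? [_ [? _]]].
    pose proof (Rmin_l (I k s) 0). apply Rmult_le_compat_l; [nra|lra]. }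
  assert (- (ThetaMax * r) <= Rmin (Th s) 0)
    by (apply Rmin_glb; [lra|assert (0 <= ThetaMax * r) by nra; lra]).
  pose proof (Rmin_r (Th s) 0). unfold negsq. rewrite <- Hrr.
  assert (0 <= ThetaMax * r) by nra. nra.
Qed.

Lemma negW'_le T : 0 < T -> exists K, 0 <= K /\ forall s, 0 < s <= T -> negW' s <= K * negW s.
Proof.
  intros HT. destruct (sol_bounded_0T T) as [B HB]. pose proof kavg_pos. pose proof ThetaMax_ge0.
  set (TB := / kavg n p * sumk n (fun j => phi j * p j * B)).
  assert (HB0 : 0 <= B) by (destruct (HB 1%nat ltac:(lia) 0 ltac:(lra)) as [HS _];
                            pose proof (Rabs_pos (S 1%nat 0)); lra).
  assert (HTB : 0 <= TB).
  { apply Rmult_le_pos; [left; apply Rinv_0_lt_compat; lra|]. apply sumk_nonneg.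
    intros j Hj. destruct (class_pos j Hj) as [? [_ [? _]]]. apply Rmult_le_pos; nra. }
  set (rate := fun k => 8 * (lam k * TB + delta * lam k * TB + lam k * B + delta * lam k * B
                             + gamma + eta + omega + mu k + beta)).
  set (cTh := fun k => lam k * B + delta * lam k * B).
  assert (Hrate : forall k, (1 <= k <= n)%nat -> 0 <= rate k /\ 0 <= cTh k).
  { intros k Hk. destruct (class_pos k Hk) as [_ [Hl [_ Hm]]].
    assert (0 <= delta * lam k) by nra. unfold rate, cTh.
    split; repeat apply Rplus_le_le_0_compat; try apply Rmult_le_pos; nra. }
  exists (sumk n rate + sumk n cTh * (ThetaMax * ThetaMax)).
  split; [pose proof (sumk_nonneg n rate ltac:(intros k Hk; apply Hrate; auto));
          pose proof (sumk_nonneg n cTh ltac:(intros k Hk; apply Hrate; auto)); nra|].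
  intros s Hs.
  assert (HTh : Rabs (Th s) <= TB) by (apply Rabs_Th_le; intros k Hk; apply (HB k Hk s); lra).
  set (Y := fun k => negsq (S k s) + negsq (V k s) + negsq (I k s) + negsq (Q k s)).
  assert (Hclass : negW' s <= sumk n (fun k => rate k * Y k) + sumk n (fun k => cTh k * negsq (Th s))).
  { rewrite <- sumk_plus. apply sumk_le. intros k Hk.
    destruct (HB k Hk s ltac:(lra)) as [B1 [B2 _]].
    pose proof (Nk_bounds k ltac:(lia)). destruct (class_pos k Hk) as [_ [Hl [_ Hm]]].
    assert (0 < Lam b d Phi k) by (rewrite Lam_Nk by lia; nra).
    pose proof (negsq_sum_derive_le (Lam b d Phi k) (lam k) (mu k) gamma eta omega delta beta d B TB
      (S k s) (V k s) (I k s) (Q k s) (Th s) ltac:(lra) Hl Hm Hgamma ltac:(lra) Homega ltac:(lra)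
      Hbeta Hd B1 B2 HTh).
    unfold dS, dV, dI, dQ, rate, cTh, Y. lra. }
  assert (sumk n (fun k => rate k * Y k) <= sumk n rate * negW s)
    by (apply sumk_mult_le; intros k Hk; split; [apply Hrate; auto|apply negW_class_ge0]).
  assert (sumk n (fun k => cTh k * negsq (Th s)) <= sumk n cTh * (ThetaMax * ThetaMax * negW s)).
  { rewrite (sumk_ext n _ (fun k => negsq (Th s) * cTh k)) by (intros; ring).
    rewrite sumk_scal, Rmult_comm. apply Rmult_le_compat_l; [|apply negsq_Th_le].
    apply sumk_nonneg. intros k Hk. apply Hrate; auto. }
  lra.
Qed.

Lemma sol_nonneg t : 0 <= t -> forall k, (1 <= k <= n)%nat ->
  0 <= S k t /\ 0 <= V k t /\ 0 <= I k t /\ 0 <= Q k t.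
Proof.
  intros Ht k Hk. destruct (Rle_lt_or_eq_dec 0 t Ht) as [Htp| <-].
  2: { destruct (Hinit k Hk) as [? [? [? [? _]]]]. auto. }
  destruct (negW'_le t Htp) as [K [HK HW']].
  assert (HW : negW t = 0)
    by (apply (gronwall_zero negW negW' K t HK negW_derive HW' (fun s _ => negW_ge0 s) negW_small0); lra).
  pose proof (negW_ge_class t k Hk). rewrite HW in H.
  pose proof (negsq_ge0 (S k t)); pose proof (negsq_ge0 (V k t));
  pose proof (negsq_ge0 (I k t)); pose proof (negsq_ge0 (Q k t)).
  repeat split; apply negsq_le0_inv; lra.
Qed.

Lemma sol_le_Nk t k : 0 <= t -> (1 <= k <= n)%nat ->
  S k t <= Nk k /\ V k t <= Nk k /\ I k t <= Nk k /\ Q k t <= Nk k.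
Proof.
  intros Ht Hk. pose proof (conservation k t Hk Ht).
  destruct (sol_nonneg t Ht k Hk) as [? [? [? ?]]]. lra.
Qed.

Lemma sol_in_01 k t : (1 <= k <= n)%nat -> 0 <= t ->
  0 <= S k t <= 1 /\ 0 <= V k t <= 1 /\ 0 <= I k t <= 1 /\ 0 <= Q k t <= 1.
Proof.
  intros Hk Ht. destruct (sol_nonneg t Ht k Hk) as [? [? [? ?]]].
  destruct (sol_le_Nk t k Ht Hk) as [? [? [? ?]]]. pose proof (Nk_bounds k ltac:(lia)).
  repeat split; lra.
Qed.

Lemma Th_range t : 0 <= t -> 0 <= Th t <= ThetaMax.
Proof.
  intros Ht. pose proof kavg_pos. unfold Th, Theta, ThetaMax. split.
  - apply Rmult_le_pos; [left; apply Rinv_0_lt_compat; lra|]. apply sumk_nonneg. intros k Hk.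
    destruct (sol_nonneg t Ht k Hk) as [_ [_ [? _]]]. destruct (class_pos k Hk) as [? [_ [? _]]].
    apply Rmult_le_pos; nra.
  - apply Rmult_le_compat_l; [left; apply Rinv_0_lt_compat; lra|]. apply sumk_le. intros k Hk.
    destruct (sol_in_01 k t Hk Ht) as [_ [_ [? _]]]. destruct (class_pos k Hk) as [? [_ [? _]]].
    assert (0 < phi k * p k) by nra. rewrite <- (Rmult_1_r (phi k * p k)) at 2.
    apply Rmult_le_compat_l; lra.
Qed.

(* Some class starts infected, and then stays infected by the integrating factor bound. *)
Lemma Th_pos t : 0 <= t -> 0 < Th t.
Proof.
  intros Ht. pose proof kavg_pos. destruct (sumk_exists_pos n _ HI0) as [j [Hj Hpj]].
  destruct (class_pos j Hj) as [Hpj' [Hlj [Hphj _]]].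
  assert (HIj0 : 0 < I j 0) by (apply Rmult_lt_reg_l with (p j); lra).
  assert (HIj : 0 < I j t).
  { destruct (Rle_lt_or_eq_dec 0 t Ht) as [Htp| <-]; auto.
    destruct (sol_right_cont0 j Hj) as [_ [_ [R3 _]]].
    assert (Hlb := integrating_factor_lb (I j) (dI j) kappa ltac:(unfold kappa; lra)
      (fun s hs => proj1 (proj2 (proj2 (sol_derive j s Hj hs))))).
    assert (forall s, 0 < s -> 0 <= dI j s + kappa * I j s).
    { intros s hs. unfold dI, fI, kappa. destruct (sol_nonneg s ltac:(lra) j Hj) as [? [? _]].
      pose proof (Th_range s ltac:(lra)).
      assert (0 <= Th s * (S j s + delta * V j s)) by (apply Rmult_le_pos; nra). nra. }
    specialize (Hlb H0 R3 ltac:(lra) t Htp). pose proof (exp_pos (- (kappa * t))). nra. }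
  unfold Th, Theta. apply Rmult_lt_0_compat; [apply Rinv_0_lt_compat; lra|].
  eapply Rlt_le_trans; [|apply (sumk_ge_term n (fun i => phi i * p i * I i t) j)]; auto.
  - apply Rmult_lt_0_compat; [apply Rmult_lt_0_compat|]; lra.
  - intros k Hk. destruct (sol_nonneg t Ht k Hk) as [_ [_ [? _]]].
    destruct (class_pos k Hk) as [? [_ [? _]]].
    apply Rmult_le_pos; nra.
Qed.

Lemma S_pos k t : (1 <= k <= n)%nat -> 0 < t -> 0 < S k t.
Proof.
  intros Hk Ht. destruct (sol_right_cont0 k Hk) as [R1 _]. destruct (Hinit k Hk) as [HS0 _].
  pose proof ThetaMax_ge0. destruct (class_pos k Hk) as [_ [Hl [_ Hm]]].
  apply (integrating_factor_pos (S k) (dS k) (lam k * ThetaMax + mu k + d)); auto;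
    [nra|intros s hs; apply (sol_derive k s Hk hs)|].
  intros s hs. unfold dS, fS. rewrite Lam_Nk by lia. pose proof (Nk_bounds k ltac:(lia)).
  destruct (sol_nonneg s ltac:(lra) k Hk) as [? [? [? ?]]]. pose proof (Th_range s ltac:(lra)).
  assert (0 <= lam k * (ThetaMax - Th s) * S k s) by (apply Rmult_le_pos; [apply Rmult_le_pos|]; lra).
  assert (0 <= eta * Q k s) by (rewrite <- Heq; nra). nra.
Qed.

Lemma V_pos k t : (1 <= k <= n)%nat -> 0 < t -> 0 < V k t.
Proof.
  intros Hk Ht. destruct (sol_right_cont0 k Hk) as [_ [R2 _]]. destruct (Hinit k Hk) as [_ [HV0 _]].
  pose proof ThetaMax_ge0. destruct (class_pos k Hk) as [_ [Hl [_ Hm]]].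
  assert (0 <= delta * lam k * ThetaMax) by (apply Rmult_le_pos; [apply Rmult_le_pos|]; lra).
  apply (integrating_factor_pos (V k) (dV k) (delta * lam k * ThetaMax + d + omega)); auto;
    [lra|intros s hs; apply (sol_derive k s Hk hs)|].
  intros s hs. unfold dV, fV. pose proof (S_pos k s Hk hs).
  destruct (sol_nonneg s ltac:(lra) k Hk) as [? [? _]]. pose proof (Th_range s ltac:(lra)).
  assert (0 <= delta * lam k * (ThetaMax - Th s) * V k s)
    by (apply Rmult_le_pos; [apply Rmult_le_pos; [apply Rmult_le_pos|]|]; lra).
  nra.
Qed.

Lemma I_pos k t : (1 <= k <= n)%nat -> 0 < t -> 0 < I k t.
Proof.
  intros Hk Ht. destruct (sol_right_cont0 k Hk) as [_ [_ [R3 _]]].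
  destruct (Hinit k Hk) as [_ [_ [HI0' _]]].
  destruct (class_pos k Hk) as [_ [Hl _]].
  apply (integrating_factor_pos (I k) (dI k) kappa); auto;
    [unfold kappa; lra|intros s hs; apply (sol_derive k s Hk hs)|].
  intros s hs. unfold dI, fI, kappa. pose proof (S_pos k s Hk hs). pose proof (V_pos k s Hk hs).
  pose proof (Th_pos s ltac:(lra)).
  assert (0 < Th s * (S k s + delta * V k s)) by (apply Rmult_lt_0_compat; nra). nra.
Qed.

(* With [gamma = eta] and conservation, the [S]-equation no longer involves [I] and [Q]. *)
Lemma dS_eq k t : (1 <= k <= n)%nat -> 0 <= t ->
  dS k t = d * Nk k + gamma * (Nk k - S k t - V k t) + omega * V k t - (mu k + d) * S k t
           - lam k * S k t * Th t.
Proof.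
  intros Hk Ht. pose proof (conservation k t Hk Ht). unfold dS, fS. rewrite Lam_Nk, <- Heq by lia.
  replace (Nk k - S k t - V k t) with (I k t + Q k t) by lra. ring.
Qed.

Lemma sol_derive_bounded k : (1 <= k <= n)%nat ->
  bounded_from 1 (dS k) /\ bounded_from 1 (dV k) /\ bounded_from 1 (dI k) /\ bounded_from 1 (dQ k).
Proof.
  intros Hk. pose proof (Nk_bounds k ltac:(lia)). destruct (class_pos k Hk) as [_ [Hl [_ Hm]]].
  assert (0 < Lam b d Phi k) by (rewrite Lam_Nk by lia; nra).
  pose proof ThetaMax_ge0. assert (0 <= delta * lam k) by nra.
  assert (Hst : forall t, 1 <= t -> (0 <= S k t <= 1 /\ 0 <= V k t <= 1 /\ 0 <= I k t <= 1 /\ 0 <= Q k t <= 1)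
                               /\ 0 <= Th t <= ThetaMax)
    by (intros t Ht; split; [apply sol_in_01|apply Th_range]; auto; lra).
  assert (Hprod : forall t x, 1 <= t -> 0 <= x <= 1 -> forall c, 0 <= c ->
                    0 <= c * x * Th t <= c * ThetaMax).
  { intros t x Ht Hx c Hc. destruct (Hst t Ht) as [_ HT].
    rewrite Rmult_assoc. split; [apply Rmult_le_pos|apply Rmult_le_compat_l]; nra. }
  repeat split.
  - apply bounded_from_of_bounds with (Lam b d Phi k - lam k * ThetaMax - (mu k + d))
      (Lam b d Phi k + gamma + eta + omega).
    intros t Ht. destruct (Hst t Ht) as [[HS [HV [HI HQ]]] _].
    pose proof (Hprod t (S k t) Ht HS (lam k) ltac:(lra)).
    unfold dS, fS. rewrite <- Heq. nra.
  - apply bounded_from_of_bounds with (- (delta * lam k * ThetaMax) - (d + omega)) (mu k).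
    intros t Ht. destruct (Hst t Ht) as [[HS [HV [HI HQ]]] _].
    pose proof (Hprod t (V k t) Ht HV (delta * lam k) H2).
    unfold dV, fV. nra.
  - apply bounded_from_of_bounds with (- (gamma + beta + d)) (lam k * ThetaMax + delta * lam k * ThetaMax).
    intros t Ht. destruct (Hst t Ht) as [[HS [HV [HI HQ]]] _].
    pose proof (Hprod t (S k t) Ht HS (lam k) ltac:(lra)).
    pose proof (Hprod t (V k t) Ht HV (delta * lam k) H2).
    unfold dI, fI. nra.
  - apply bounded_from_of_bounds with (- (eta + d)) beta.
    intros t Ht. destruct (Hst t Ht) as [[HS [HV [HI HQ]]] _]. unfold dQ, fQ. rewrite <- Heq. nra.
Qed.

Lemma sol_lip_bounded k : (1 <= k <= n)%nat ->
  lip_bounded 1 (S k) /\ lip_bounded 1 (V k) /\ lip_bounded 1 (I k) /\ lip_bounded 1 (Q k).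
Proof.
  intros Hk. destruct (sol_derive_bounded k Hk) as [BS [BV [BI BQ]]].
  assert (Hlip : forall f f', (forall t, 1 <= t -> derivable_pt_lim f t (f' t)) ->
            bounded_from 1 f' -> (forall t, 1 <= t -> 0 <= f t <= 1) -> lip_bounded 1 f)
    by (intros f f' Hf_d Hf' Hf; apply lip_bounded_of_derive with f'; auto;
        apply bounded_from_of_bounds with 0 1; auto).
  assert (H01 : forall t, 1 <= t -> (0 <= S k t <= 1 /\ 0 <= V k t <= 1 /\ 0 <= I k t <= 1 /\ 0 <= Q k t <= 1))
    by (intros t Ht; apply sol_in_01; auto; lra).
  assert (Hder : forall t, 1 <= t ->
    derivable_pt_lim (S k) t (dS k t) /\ derivable_pt_lim (V k) t (dV k t) /\
    derivable_pt_lim (I k) t (dI k t) /\ derivable_pt_lim (Q k) t (dQ k t))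
    by (intros t Ht; apply sol_derive; auto; lra).
  split; [|split; [|split]]; [apply (Hlip _ (dS k))|apply (Hlip _ (dV k))|apply (Hlip _ (dI k))
    |apply (Hlip _ (dQ k))]; auto; intros t Ht; apply Hder || apply H01; auto.
Qed.

Lemma Th_lip_bounded : lip_bounded 1 Th.
Proof.
  apply (lip_bounded_scal 1 (/ kavg n p) (fun t => sumk n (fun i => phi i * p i * I i t))).
  apply (lip_bounded_sumk 1 n (fun i t => phi i * p i * I i t)). intros k Hk.
  apply lip_bounded_scal, sol_lip_bounded; auto.
Qed.

Lemma dS_lip_bounded k : (1 <= k <= n)%nat -> lip_bounded 1 (dS k).
Proof.
  intros Hk. destruct (sol_lip_bounded k Hk) as [LS [LV [LI LQ]]]. pose proof Th_lip_bounded.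
  apply lip_bounded_ext with (fun t => Lam b d Phi k + (- lam k) * (S k t * Th t) + gamma * I k t
    + eta * Q k t + omega * V k t + (- (mu k + d)) * S k t); [intros; unfold dS, fS; ring|].
  repeat apply lip_bounded_plus; auto using lip_bounded_const, lip_bounded_scal, lip_bounded_mult.
Qed.

Section Lyapunov.
Variable ths : R.
Hypotheses (Hths : 0 < ths) (HG : G ths = 1).

Let Ss k := Seq k ths.
Let Vs k := Veq k ths.
Let Is k := Ieq k ths.

Lemma Th_star : Theta n p phi Is = ths.
Proof. unfold Is. rewrite Theta_Ieq, HG; lra. Qed.

Lemma star_pos k : (1 <= k <= n)%nat -> 0 < Ss k /\ 0 < Vs k /\ 0 < Is k.
Proof. intros Hk. destruct (eq_class_pos k ths Hk Hths) as [? [? [? _]]]. auto. Qed.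

Lemma star_relations k : (1 <= k <= n)%nat ->
  d * Nk k + gamma * (Nk k - Ss k - Vs k) + omega * Vs k - (mu k + d) * Ss k = lam k * Ss k * ths /\
  mu k * Ss k = delta * lam k * Vs k * ths + (d + omega) * Vs k /\
  (gamma + beta + d) * Is k = lam k * ths * (Ss k + delta * Vs k).
Proof.
  intros Hk. destruct (eq_class_solves k ths Hk Hths) as [E1 [E2 [E3 E4]]].
  pose proof (eq_class_sum k ths Hk Hths). unfold fS, fV, fI, fQ in *.
  rewrite Lam_Nk, <- Heq in E1 by lia. unfold Ss, Vs, Is.
  repeat split; [replace (Nk k - Seq k ths - Veq k ths) with (Ieq k ths + Qeq k ths) by lra| |]; lra.
Qed.

Definition weight k := phi k * p k / kappa.

(* [Q] is left out: it is determined by conservation. *)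
Definition Lyap t := sumk n (fun k => weight k * (Ss k * volterra (S k t / Ss k)
  + Vs k * volterra (V k t / Vs k) + Is k * volterra (I k t / Is k))).
Definition Lyap' t := sumk n (fun k => weight k * ((1 - Ss k / S k t) * dS k t
  + (1 - Vs k / V k t) * dV k t + (1 - Is k / I k t) * dI k t)).
Definition dissip k t := (d + gamma) * (S k t - Ss k) * (S k t - Ss k) / S k t
  + (d + gamma) * Vs k * volterra (V k t / Vs k)
  + lam k * Ss k * ths * volterra ((S k t / Ss k) * (Th t / ths) / (I k t / Is k)).

Lemma weight_pos k : (1 <= k <= n)%nat -> 0 < weight k.
Proof.
  intros Hk. destruct (class_pos k Hk) as [? [_ [? _]]]. apply Rdiv_lt_0_compat; unfold kappa; nra.
Qed.

Lemma Lyap_derive t : 0 < t -> derivable_pt_lim Lyap t (Lyap' t).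
Proof.
  intros Ht. apply (derivable_pt_lim_sumk n).
  intros k Hk. destruct (sol_derive k t Hk Ht) as [DS [DV [DI _]]].
  destruct (star_pos k Hk) as [P1 [P2 P3]].
  apply derivable_pt_lim_scal.
  repeat apply derivable_pt_lim_plus; apply derivable_pt_lim_volterra_ratio; auto;
    [apply S_pos|apply V_pos|apply I_pos]; auto.
Qed.

Lemma Lyap_class_ge k t : (1 <= k <= n)%nat -> 0 < t ->
  0 <= Ss k * volterra (S k t / Ss k) /\ 0 <= Vs k * volterra (V k t / Vs k)
  /\ 0 <= Is k * volterra (I k t / Is k).
Proof.
  intros Hk Ht. destruct (star_pos k Hk) as [P1 [P2 P3]].
  pose proof (S_pos k t Hk Ht). pose proof (V_pos k t Hk Ht). pose proof (I_pos k t Hk Ht).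
  repeat split; apply Rmult_le_pos; try lra; apply volterra_ge0, Rdiv_lt_0_compat; auto.
Qed.

Lemma Lyap_ge_terms k t : (1 <= k <= n)%nat -> 0 < t ->
  weight k * (Ss k * volterra (S k t / Ss k)) <= Lyap t /\
  weight k * (Vs k * volterra (V k t / Vs k)) <= Lyap t /\
  weight k * (Is k * volterra (I k t / Is k)) <= Lyap t.
Proof.
  intros Hk Ht.
  assert (weight k * (Ss k * volterra (S k t / Ss k) + Vs k * volterra (V k t / Vs k)
          + Is k * volterra (I k t / Is k)) <= Lyap t).
  { apply (sumk_ge_term n (fun k => weight k * (Ss k * volterra (S k t / Ss k)
      + Vs k * volterra (V k t / Vs k) + Is k * volterra (I k t / Is k)))); auto.
    intros j Hj. pose proof (weight_pos j Hj). destruct (Lyap_class_ge j t Hj Ht) as [? [? ?]].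
    apply Rmult_le_pos; lra. }
  pose proof (weight_pos k Hk). destruct (Lyap_class_ge k t Hk Ht) as [? [? ?]].
  repeat split; nra.
Qed.

Lemma Lyap_ge0 t : 0 < t -> 0 <= Lyap t.
Proof.
  intros Ht. pose proof (Lyap_ge_terms 1%nat t ltac:(lia) Ht) as [H _].
  pose proof (weight_pos 1%nat ltac:(lia)). destruct (Lyap_class_ge 1%nat t ltac:(lia) Ht) as [? _].
  nra.
Qed.

Lemma dissip_ge_parts k t : (1 <= k <= n)%nat -> 0 < t ->
  (d + gamma) * ((S k t - Ss k) * (S k t - Ss k)) <= dissip k t /\
  (d + gamma) * Vs k * volterra (V k t / Vs k) <= dissip k t /\
  lam k * Ss k * ths * volterra ((S k t / Ss k) * (Th t / ths) / (I k t / Is k)) <= dissip k t.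
Proof.
  intros Hk Ht. unfold dissip. destruct (star_pos k Hk) as [P1 [P2 P3]].
  pose proof (S_pos k t Hk Ht). pose proof (V_pos k t Hk Ht). pose proof (I_pos k t Hk Ht).
  pose proof (Th_pos t ltac:(lra)). destruct (sol_in_01 k t Hk ltac:(lra)) as [[_ HS1] _].
  destruct (class_pos k Hk) as [_ [Hl _]].
  remember ((S k t - Ss k) * (S k t - Ss k)) as sq eqn:Esq.
  assert (Hsq : 0 <= sq) by (rewrite Esq; apply Rle_0_sqr).
  replace ((d + gamma) * (S k t - Ss k) * (S k t - Ss k) / S k t) with ((d + gamma) * sq / S k t)
    by (rewrite Esq; field; lra).
  (* [S <= 1] lets the quadratic term dominate its undivided version. *)
  assert ((d + gamma) * sq <= (d + gamma) * sq / S k t).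
  { apply Rmult_le_reg_r with (S k t); auto.
    replace ((d + gamma) * sq / S k t * S k t) with ((d + gamma) * sq) by (field; lra).
    rewrite <- (Rmult_1_r ((d + gamma) * sq)) at 2. apply Rmult_le_compat_l; nra. }
  assert (0 <= volterra (V k t / Vs k)) by (apply volterra_ge0, Rdiv_lt_0_compat; auto).
  assert (0 <= volterra ((S k t / Ss k) * (Th t / ths) / (I k t / Is k))).
  { apply volterra_ge0, Rdiv_lt_0_compat; [apply Rmult_lt_0_compat|]; apply Rdiv_lt_0_compat; auto.
    }
  assert (0 <= (d + gamma) * Vs k * volterra (V k t / Vs k)) by (apply Rmult_le_pos; nra).
  assert (0 <= lam k * Ss k * ths * volterra ((S k t / Ss k) * (Th t / ths) / (I k t / Is k)))
    by (apply Rmult_le_pos; [apply Rmult_le_pos; [apply Rmult_le_pos|]|]; lra).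
  assert (0 <= (d + gamma) * sq) by nra.
  repeat split; lra.
Qed.

Lemma dissip_ge0 k t : (1 <= k <= n)%nat -> 0 < t -> 0 <= dissip k t.
Proof.
  intros Hk Ht. destruct (dissip_ge_parts k t Hk Ht) as [H _].
  assert (0 <= (d + gamma) * ((S k t - Ss k) * (S k t - Ss k))) by (apply Rmult_le_pos; [lra|apply Rle_0_sqr]).
  lra.
Qed.

Lemma Lyap'_class_le k t : (1 <= k <= n)%nat -> 0 < t ->
  weight k * ((1 - Ss k / S k t) * dS k t + (1 - Vs k / V k t) * dV k t + (1 - Is k / I k t) * dI k t)
  <= - (weight k * dissip k t)
     + phi k * p k * Is k * (Th t / ths - I k t / Is k - ln (Th t / ths) + ln (I k t / Is k)).
Proof.
  intros Hk Ht. destruct (star_pos k Hk) as [P1 [P2 P3]].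
  destruct (star_relations k Hk) as [E1 [E2 E3]].
  pose proof (weight_pos k Hk). destruct (class_pos k Hk) as [_ [Hl _]].
  rewrite dS_eq by (auto; lra).
  replace (dI k t) with (lam k * Th t * (S k t + delta * V k t) - (gamma + beta + d) * I k t)
    by (unfold dI, fI; ring).
  pose proof (lyapunov_term_le (S k t) (V k t) (I k t) (Th t) (Ss k) (Vs k) (Is k) ths (lam k) (mu k)
    delta gamma beta d omega (Nk k) (S_pos k t Hk Ht) (V_pos k t Hk Ht) (I_pos k t Hk Ht)
    (Th_pos t ltac:(lra)) P1 P2 P3 Hths Hl ltac:(lra) Hgamma Hd ltac:(lra) E1 E2 E3) as Hterm.
  unfold dV, fV. fold (dissip k t) in Hterm.
  replace (phi k * p k) with (weight k * (gamma + beta + d)) by (unfold weight, kappa; field; lra).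
  apply Rmult_le_compat_l with (r := weight k) in Hterm; [|lra].
  unfold dissip in *. lra.
Qed.

Lemma Lyap'_le t k0 : 0 < t -> (1 <= k0 <= n)%nat -> Lyap' t <= - (weight k0 * dissip k0 t).
Proof.
  intros Ht Hk0. pose proof kavg_pos. pose proof (Th_pos t ltac:(lra)).
  unfold Lyap'. eapply Rle_trans; [apply sumk_le; intros k Hk; exact (Lyap'_class_le k t Hk Ht)|].
  rewrite sumk_plus.
  assert (Hcross : sumk n (fun k => phi k * p k * Is k
            * (Th t / ths - I k t / Is k - ln (Th t / ths) + ln (I k t / Is k))) <= 0).
  { replace (Th t / ths) with ((kavg n p * Th t) / (kavg n p * ths)) by (field; lra).
    apply (sumk_ratio_ln_le0 n (fun k => phi k * p k) Is (fun k => I k t)).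
    - intros k Hk. destruct (class_pos k Hk) as [? [_ [? _]]].
      split; [nra|split; [apply star_pos|apply I_pos]; auto].
    - nra.
    - nra.
    - unfold Th, Theta. field. lra.
    - pose proof Th_star as E. unfold Theta in E. rewrite <- E. field. lra. }
  assert (sumk n (fun k => - (weight k * dissip k t)) <= - (weight k0 * dissip k0 t)).
  { apply (sumk_le_term n (fun k => - (weight k * dissip k t))); auto. intros k Hk.
    pose proof (weight_pos k Hk). pose proof (dissip_ge0 k t Hk Ht). nra. }
  lra.
Qed.

Lemma Lyap_nonincr t : 1 <= t -> Lyap t <= Lyap 1.
Proof.
  intros Ht. destruct (Rle_lt_or_eq_dec 1 t Ht) as [Hlt| <-]; [|lra].
  apply (derive_nonpos_le Lyap Lyap' 1 t Hlt); [intros c Hc; apply Lyap_derive; lra|].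
  intros c Hc. pose proof (Lyap'_le c 1%nat ltac:(lra) ltac:(lia)).
  pose proof (weight_pos 1%nat ltac:(lia)).
  pose proof (dissip_ge0 1%nat c ltac:(lia) ltac:(lra)). nra.
Qed.

Lemma sol_lower_bound k : (1 <= k <= n)%nat ->
  exists m, 0 < m /\ forall t, 1 <= t -> m <= S k t /\ m <= V k t /\ m <= I k t.
Proof.
  intros Hk. destruct (star_pos k Hk) as [P1 [P2 P3]]. pose proof (weight_pos k Hk).
  set (lb := fun xs => xs * exp (- 1 - Lyap 1 / (weight k * xs))).
  assert (Hlb : forall x xs t, 1 <= t -> 0 < x -> 0 < xs ->
                  weight k * (xs * volterra (x / xs)) <= Lyap t -> lb xs <= x).
  { intros x xs t Ht Hx Hxs HL. apply exp_le_of_volterra_weighted; auto.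
    pose proof (Lyap_nonincr t Ht). lra. }
  exists (Rmin (lb (Ss k)) (Rmin (lb (Vs k)) (lb (Is k)))).
  split; [repeat apply Rmin_glb_lt; apply Rmult_lt_0_compat; auto; apply exp_pos|].
  intros t Ht. destruct (Lyap_ge_terms k t Hk ltac:(lra)) as [LS [LV LI]].
  pose proof (Hlb _ _ t Ht (S_pos k t Hk ltac:(lra)) P1 LS).
  pose proof (Hlb _ _ t Ht (V_pos k t Hk ltac:(lra)) P2 LV).
  pose proof (Hlb _ _ t Ht (I_pos k t Hk ltac:(lra)) P3 LI).
  pose proof (Rmin_l (lb (Ss k)) (Rmin (lb (Vs k)) (lb (Is k)))).
  pose proof (Rmin_r (lb (Ss k)) (Rmin (lb (Vs k)) (lb (Is k)))).
  pose proof (Rmin_l (lb (Vs k)) (lb (Is k))). pose proof (Rmin_r (lb (Vs k)) (lb (Is k))).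
  repeat split; lra.
Qed.


Lemma lim_infty_dissip k F : (1 <= k <= n)%nat ->
  (forall t, 1 <= t -> 0 <= F t <= weight k * dissip k t) -> lip_bounded 1 F -> lim_infty F 0.
Proof.
  intros Hk HF [HL _]. apply (barbalat_lyapunov Lyap Lyap' F 1); auto.
  - intros t Ht; apply Lyap_derive; lra.
  - intros t Ht. pose proof (Lyap'_le t k ltac:(lra) Hk). specialize (HF t Ht). lra.
  - intros t Ht; apply HF; auto.
  - intros t Ht; apply Lyap_ge0; lra.
Qed.

Lemma lim_infty_S k : (1 <= k <= n)%nat -> lim_infty (S k) (Ss k).
Proof.
  intros Hk. pose proof (weight_pos k Hk). set (c := weight k * (d + gamma)).
  assert (Hc : 0 < c) by (unfold c; nra).
  apply lim_infty_of_sqr.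
  apply (lim_infty_ext (fun t => / c * (c * ((S k t - Ss k) * (S k t - Ss k))))) with 0;
    [intros; field; lra|].
  rewrite <- (Rmult_0_r (/ c)). apply lim_infty_scal, (lim_infty_dissip k); auto.
  - intros t Ht. destruct (dissip_ge_parts k t Hk ltac:(lra)) as [HS _].
    split; [apply Rmult_le_pos; [lra|apply Rle_0_sqr]|].
    unfold c. rewrite Rmult_assoc. apply Rmult_le_compat_l; lra.
  - apply lip_bounded_scal. destruct (sol_lip_bounded k Hk) as [LS _].
    apply lip_bounded_mult; apply lip_bounded_minus; auto using lip_bounded_const.
Qed.

Lemma lim_infty_of_volterra_dissip k (w : R -> R) (c m : R) : (1 <= k <= n)%nat -> 0 < c -> 0 < m ->
  (forall t, 1 <= t -> m <= w t) -> lip_bounded 1 w ->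
  (forall t, 1 <= t -> c * volterra (w t) <= dissip k t) -> lim_infty w 1.
Proof.
  intros Hk Hc Hm Hw HL Hdis. pose proof (weight_pos k Hk).
  apply lim_infty_volterra with 1; [intros t Ht; specialize (Hw t Ht); lra|].
  apply (lim_infty_ext (fun t => / (weight k * c) * (weight k * c * volterra (w t)))) with 0;
    [intros; field; nra|].
  rewrite <- (Rmult_0_r (/ (weight k * c))). apply lim_infty_scal, (lim_infty_dissip k); auto.
  - intros t Ht. specialize (Hw t Ht).
    assert (0 <= volterra (w t)) by (apply volterra_ge0; lra).
    split; [apply Rmult_le_pos; nra|]. rewrite Rmult_assoc. apply Rmult_le_compat_l; [lra|auto].
  - apply lip_bounded_scal, lip_bounded_volterra with m; auto.
Qed.

Lemma lim_infty_V k : (1 <= k <= n)%nat -> lim_infty (V k) (Vs k).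
Proof.
  intros Hk. destruct (sol_lower_bound k Hk) as [m [Hm Hlow]].
  destruct (star_pos k Hk) as [_ [P2 _]].
  assert (Hw : lim_infty (fun t => V k t / Vs k) 1).
  { apply (lim_infty_of_volterra_dissip k _ ((d + gamma) * Vs k) (m / Vs k)); auto.
    - apply Rmult_lt_0_compat; lra.
    - apply Rdiv_lt_0_compat; auto.
    - intros t Ht. apply Rmult_le_compat_r; [left; apply Rinv_0_lt_compat; auto|apply Hlow; auto].
    - apply lip_bounded_ext with (fun t => / Vs k * V k t); [intros; unfold Rdiv; ring|].
      apply lip_bounded_scal, sol_lip_bounded; auto.
    - intros t Ht. apply dissip_ge_parts; auto; lra. }
  replace (Vs k) with (Vs k * 1) by ring.
  apply (lim_infty_ext (fun t => Vs k * (V k t / Vs k))) with 0; [intros; field; lra|].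
  apply lim_infty_scal; auto.
Qed.

(* Barbalat applied to [S] itself: [S'] tends to [0], and the [S]-equation then pins [Theta]. *)
Lemma lim_infty_Th : lim_infty Th ths.
Proof.
  set (k := 1%nat). assert (Hk : (1 <= k <= n)%nat) by (unfold k; lia).
  destruct (star_pos k Hk) as [P1 _]. destruct (star_relations k Hk) as [E1 _].
  destruct (class_pos k Hk) as [_ [Hl _]].
  assert (HdS : lim_infty (dS k) 0).
  { apply (barbalat_derive (S k) (dS k) 1 (Ss k)); [|apply lim_infty_S; auto|apply dS_lip_bounded; auto].
    intros t Ht. apply (sol_derive k t Hk). lra. }
  set (num := fun t => d * Nk k + gamma * Nk k - (gamma + mu k + d) * S k t + (omega - gamma) * V k t - dS k t).
  assert (Hnum : lim_infty num (lam k * Ss k * ths)).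
  { replace (lam k * Ss k * ths)
      with (d * Nk k + gamma * Nk k - (gamma + mu k + d) * Ss k + (omega - gamma) * Vs k - 0) by lra.
    apply lim_infty_minus; [|exact HdS].
    apply lim_infty_plus; [apply lim_infty_minus; [apply lim_infty_const|]|];
      apply lim_infty_scal; [apply lim_infty_S|apply lim_infty_V]; auto. }
  assert (Hden : lim_infty (fun t => / (lam k * S k t)) (/ (lam k * Ss k)))
    by (apply lim_infty_inv; [nra|apply lim_infty_scal, lim_infty_S; auto]).
  replace ths with (lam k * Ss k * ths * / (lam k * Ss k)) by (field; lra).
  apply (lim_infty_ext (fun t => num t * / (lam k * S k t))) with 1;
    [|apply lim_infty_mult; auto].
  intros t Ht. pose proof (S_pos k t Hk ltac:(lra)). unfold num. rewrite dS_eq by (auto; lra).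
  field. lra.
Qed.

Lemma lim_infty_I k : (1 <= k <= n)%nat -> lim_infty (I k) (Is k).
Proof.
  intros Hk. destruct (sol_lower_bound k Hk) as [m [Hm Hlow]].
  destruct (star_pos k Hk) as [P1 [_ P3]]. destruct (class_pos k Hk) as [Hpk [Hl [Hph _]]].
  pose proof kavg_pos.
  set (w := fun t => (S k t / Ss k) * (Th t / ths) / (I k t / Is k)).
  set (mT := / kavg n p * (phi k * p k * m)).
  assert (HmT : 0 < mT)
    by (apply Rmult_lt_0_compat; [apply Rinv_0_lt_compat|repeat apply Rmult_lt_0_compat]; lra).
  assert (HThl : forall t, 1 <= t -> mT <= Th t).
  { intros t Ht. unfold Th, Theta. apply Rmult_le_compat_l; [left; apply Rinv_0_lt_compat; lra|].
    destruct (Hlow t Ht) as [_ [_ HI]].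
    eapply Rle_trans; [|apply (sumk_ge_term n (fun i => phi i * p i * I i t) k)]; auto;
      [apply Rmult_le_compat_l; nra|].
    intros j Hj. destruct (sol_nonneg t ltac:(lra) j Hj) as [_ [_ [? _]]].
    destruct (class_pos j Hj) as [? [_ [? _]]]. apply Rmult_le_pos; nra. }
  assert (Hwl : forall t, 1 <= t -> (m / Ss k) * (mT / ths) / (1 / Is k) <= w t).
  { intros t Ht. unfold w. destruct (Hlow t Ht) as [HS [_ HI]]. specialize (HThl t Ht).
    destruct (sol_in_01 k t Hk ltac:(lra)) as [_ [_ [[_ HI1] _]]].
    unfold Rdiv. apply Rmult_le_compat.
    - apply Rmult_le_pos; apply Rmult_le_pos; try (left; apply Rinv_0_lt_compat); lra.
    - left. apply Rinv_0_lt_compat. rewrite Rmult_1_l. apply Rinv_0_lt_compat; lra.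
    - apply Rmult_le_compat; try apply Rmult_le_pos; try (left; apply Rinv_0_lt_compat); try lra;
        apply Rmult_le_compat_r; try (left; apply Rinv_0_lt_compat); lra.
    - apply Rinv_le_contravar; [apply Rmult_lt_0_compat; [lra|apply Rinv_0_lt_compat; lra]|].
      apply Rmult_le_compat_r; [left; apply Rinv_0_lt_compat|]; lra. }
  assert (Hw : lim_infty w 1).
  { apply (lim_infty_of_volterra_dissip k w (lam k * Ss k * ths) ((m / Ss k) * (mT / ths) / (1 / Is k)));
      auto.
    - apply Rmult_lt_0_compat; [apply Rmult_lt_0_compat|]; lra.
    - apply Rdiv_lt_0_compat; [apply Rmult_lt_0_compat|]; apply Rdiv_lt_0_compat; lra.
    - destruct (sol_lip_bounded k Hk) as [LS [_ [LI _]]]. unfold w.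
      apply (lip_bounded_div 1 _ _ (m / Is k)); [apply Rdiv_lt_0_compat; lra| | |].
      + intros t Ht. apply Rmult_le_compat_r; [left; apply Rinv_0_lt_compat; lra|apply Hlow; auto].
      + apply lip_bounded_mult.
        * apply lip_bounded_ext with (fun t => / Ss k * S k t); [intros; unfold Rdiv; ring|].
          apply lip_bounded_scal; auto.
        * apply lip_bounded_ext with (fun t => / ths * Th t); [intros; unfold Rdiv; ring|].
          apply lip_bounded_scal, Th_lip_bounded.
      + apply lip_bounded_ext with (fun t => / Is k * I k t); [intros; unfold Rdiv; ring|].
        apply lip_bounded_scal; auto.
    - intros t Ht. apply dissip_ge_parts; auto; lra. }
  (* [I = Is (S / Ss) (Th / ths) / w], and all three factors converge. *)
  replace (Is k) with (/ Ss k * Ss k * (/ ths * ths) * / 1 * Is k) by (field; lra).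
  apply (lim_infty_ext (fun t => / Ss k * S k t * (/ ths * Th t) * / w t * Is k)) with 1.
  - intros t Ht. unfold w. pose proof (S_pos k t Hk ltac:(lra)).
    pose proof (I_pos k t Hk ltac:(lra)).
    pose proof (Th_pos t ltac:(lra)). field. repeat split; lra.
  - apply lim_infty_mult; [|apply lim_infty_const].
    apply lim_infty_mult; [apply lim_infty_mult|apply lim_infty_inv; [lra|auto]];
      apply lim_infty_scal; [apply lim_infty_S; auto|apply lim_infty_Th].
Qed.

Lemma lim_infty_Q k : (1 <= k <= n)%nat -> lim_infty (Q k) (Qeq k ths).
Proof.
  intros Hk. pose proof (eq_class_sum k ths Hk Hths).
  replace (Qeq k ths) with (Nk k - Ss k - Vs k - Is k) by (unfold Ss, Vs, Is; lra).
  apply (lim_infty_ext (fun t => Nk k - S k t - V k t - I k t)) with 0;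
    [intros t Ht; pose proof (conservation k t Hk Ht); lra|].
  repeat apply lim_infty_minus; auto using lim_infty_const, lim_infty_S, lim_infty_V, lim_infty_I.
Qed.

Lemma sol_converges k : (1 <= k <= n)%nat ->
  lim_infty (S k) (Ss k) /\ lim_infty (V k) (Vs k) /\ lim_infty (I k) (Is k) /\
  lim_infty (Q k) (Qeq k ths).
Proof.
  intros Hk.
  repeat split; [apply lim_infty_S|apply lim_infty_V|apply lim_infty_I|apply lim_infty_Q]; auto.
Qed.

End Lyapunov.
End Solution.
End SVIQS.

Theorem theorem4p10
  (n : nat) (p : nat -> R) (b d Phi : R)
  (lam phi mu : nat -> R) (beta gamma eta omega delta : R)
  (Hn : (1 <= n)%nat)
  (Hp : forall k, (1 <= k <= n)%nat -> p k > 0)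
  (Hpsum : sumk n p = 1)
  (Hbd : b > d) (Hd : d > 0)
  (HPhi : Phi > 0)
  (HPhieq : Phi = / kavg n p *
      sumk n (fun i => INR i * p i * b * Phi / (d + b * INR i * Phi)))
  (Hlam : forall k, (1 <= k <= n)%nat -> lam k > 0)
  (Hphi : forall k, (1 <= k <= n)%nat -> phi k > 0)
  (Hmu : forall k, (1 <= k <= n)%nat -> mu k > 0)
  (Hbeta : beta > 0) (Hgamma : gamma > 0) (Heta : eta > 0) (Homega : omega > 0)
  (Hdelta : 0 <= delta <= 1)
  (Hge : omega >= gamma) (Heq : gamma = eta)
  (HR0 : Rnought n p b d Phi lam phi mu beta gamma omega delta > 1) :
  exists Ss Vs Is Qs : nat -> R,
    endemic_eq n p b d Phi lam phi mu beta gamma eta omega delta Ss Vs Is Qs /\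
    (forall Ss' Vs' Is' Qs' : nat -> R,
       endemic_eq n p b d Phi lam phi mu beta gamma eta omega delta Ss' Vs' Is' Qs' ->
       forall k, (1 <= k <= n)%nat ->
         Ss' k = Ss k /\ Vs' k = Vs k /\ Is' k = Is k /\ Qs' k = Qs k) /\
    (forall S V I Q : nat -> R -> R,
       is_solution n p b d Phi lam phi mu beta gamma eta omega delta S V I Q ->
       (forall k, (1 <= k <= n)%nat ->
          0 <= S k 0 /\ 0 <= V k 0 /\ 0 <= I k 0 /\ 0 <= Q k 0 /\
          S k 0 + V k 0 + I k 0 + Q k 0 = Nstar b d Phi k) ->
       sumk n (fun k => p k * I k 0) > 0 ->
       forall k, (1 <= k <= n)%nat ->
         lim_infty (S k) (Ss k) /\ lim_infty (V k) (Vs k) /\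
         lim_infty (I k) (Is k) /\ lim_infty (Q k) (Qs k)).
Proof.
  destruct (G_root n p b d Phi lam phi mu beta gamma eta omega delta
              Hn Hp Hbd Hd HPhi Hlam Hphi Hmu Hbeta Hgamma Homega Hdelta Heq HR0) as [ths [Hths HG]].
  eexists; eexists; eexists; eexists. split; [|split].
  - exact (endemic_eq_Seq n p b d Phi lam phi mu beta gamma eta omega delta
             Hn Hp Hbd Hd HPhi Hlam Hphi Hmu Hbeta Hgamma Homega Hdelta Heq ths Hths HG).
  - exact (endemic_eq_unique n p b d Phi lam phi mu beta gamma eta omega delta
             Hn Hp Hbd Hd HPhi Hlam Hphi Hmu Hbeta Hgamma Homega Hdelta Hge Heq ths Hths HG).
  - intros S V I Q Hsol Hinit HI0 k Hk.
    exact (sol_converges n p b d Phi lam phi mu beta gamma eta omega delta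
             Hn Hp Hbd Hd HPhi Hlam Hphi Hmu Hbeta Hgamma Homega Hdelta Hge Heq
             S V I Q Hsol Hinit HI0 ths Hths HG k Hk).
Qed.
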